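(* A marker-per-face strategy with point-plane data does not uniquely determine a non-convex polyhedron: there exist two distinct non-convex polyhedra $P\neq Q$ in $\mathbb{R}^3$ and a finite set $M$ of point-plane markers that is a marker-per-face markup of both $P$ and $Q$. Moreover, the same holds for point-normal data: $M$ can be chosen as a set of point-normal markers that is a marker-per-face markup of both $P$ and $Q$.
   Context: A polyhedron is a closed, connected, three-dimensional region of $\mathbb{R}^3$ whose boundary consists of finitely many polygons (faces) such that every edge of every face is shared with exactly one other face, two faces intersect only in shared edges or vertices, and the faces sharing a vertex can be cyclically ordered so that consecutive faces share an edge. Faces are taken to be maximal: the closures of the connected components of the set of points of $\partial P$ having a neighbourhood in $\partial P$ contained in a single plane. A point-plane marker is a pair $(p,R)$ with $R$ a plane and $p\in R$; a finite set $M$ of such markers is a marker-per-face markup of $P$ if each $(p,R)\in M$ has $p$ on a face $F$ of $P$ with $R$ the plane of $F$, and every face $F$ contains the point of some marker whose plane is the plane of $F$. A point-normal marker is a pair $(p,n)$ with $p\in\mathbb{R}^3$ and $n$ a unit vector; a finite set of them is a marker-per-face markup of $P$ if each $(p,n)$ has $p$ on a face $F$ of $P$ with $n$ the outward unit normal of $P$ on $F$, and every face $F$ contains the point of some marker whose vector is the outward normal of $F$. *)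

From Stdlib Require Import Reals List Arith.
Import ListNotations.
Open Scope R_scope.

Record vec3 := mkv { vx : R; vy : R; vz : R }.

Definition vadd (a b : vec3) : vec3 := mkv (vx a + vx b) (vy a + vy b) (vz a + vz b).
Definition vsub (a b : vec3) : vec3 := mkv (vx a - vx b) (vy a - vy b) (vz a - vz b).
Definition vscale (t : R) (a : vec3) : vec3 := mkv (t * vx a) (t * vy a) (t * vz a).
Definition dot (a b : vec3) : R := vx a * vx b + vy a * vy b + vz a * vz b.
Definition cross (a b : vec3) : vec3 :=
  mkv (vy a * vz b - vz a * vy b) (vz a * vx b - vx a * vz b) (vx a * vy b - vy a * vx b).
Definition vnorm (a : vec3) : R := sqrt (dot a a).
Definition dist (a b : vec3) : R := vnorm (vsub a b).
Definition vzero : vec3 := mkv 0 0 0.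

Definition pset := vec3 -> Prop.

Definition is_open (U : pset) : Prop :=
  forall x, U x -> exists r, 0 < r /\ forall y, dist x y < r -> U y.
Definition interior (S : pset) : pset :=
  fun x => exists r, 0 < r /\ forall y, dist x y < r -> S y.
Definition closure (S : pset) : pset :=
  fun x => forall r, 0 < r -> exists y, S y /\ dist x y < r.
Definition boundary (S : pset) : pset :=
  fun x => closure S x /\ ~ interior S x.
Definition is_closed (S : pset) : Prop := forall x, closure S x -> S x.
Definition bounded (S : pset) : Prop := exists B, forall x, S x -> vnorm x <= B.

Definition connected (S : pset) : Prop :=
  forall U V : pset, is_open U -> is_open V ->
    (forall x, S x -> U x \/ V x) ->
    (forall x, S x -> U x -> V x -> False) ->
    (forall x, S x -> ~ U x) \/ (forall x, S x -> ~ V x).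

Definition conn_component (A C : pset) : Prop :=
  exists x0, A x0 /\
    forall y, C y <-> exists K : pset,
      connected K /\ (forall z, K z -> A z) /\ K x0 /\ K y.

Definition is_plane (Pl : pset) : Prop :=
  exists (n : vec3) (d : R), n <> vzero /\ forall x, Pl x <-> dot n x = d.

Definition on_seg (a b x : vec3) : Prop :=
  exists t, 0 <= t <= 1 /\ x = vadd a (vscale t (vsub b a)).

Definition convex (S : pset) : Prop :=
  forall x y, S x -> S y -> forall t, 0 <= t <= 1 -> S (vadd x (vscale t (vsub y x))).

Definition vtx (V : list vec3) (i : nat) : vec3 := nth i V vzero.
Definition nxt (V : list vec3) (i : nat) : nat := Nat.modulo (S i) (length V).

Definition chain (V : list vec3) : pset :=
  fun x => exists i, (i < length V)%nat /\ on_seg (vtx V i) (vtx V (nxt V i)) x.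

Definition simple_polygon (V : list vec3) : Prop :=
  (3 <= length V)%nat /\
  (exists Pl, is_plane Pl /\ forall v, In v V -> Pl v) /\
  (forall i, (i < length V)%nat ->
     cross (vsub (vtx V (nxt V i)) (vtx V i))
           (vsub (vtx V (nxt V (nxt V i))) (vtx V (nxt V i))) <> vzero) /\
  (forall i j, (i < length V)%nat -> (j < length V)%nat -> i <> j ->
     forall x, on_seg (vtx V i) (vtx V (nxt V i)) x ->
               on_seg (vtx V j) (vtx V (nxt V j)) x ->
     (j = nxt V i /\ x = vtx V j) \/ (i = nxt V j /\ x = vtx V i)).

(* the closed region of the plane bounded by the polygon: the chain together
   with the points of the plane off the chain whose component in
   (plane minus chain) is bounded *)
Definition polygon_set (V : list vec3) : pset :=
  fun x => chain V x \/
    exists Pl, is_plane Pl /\ (forall v, In v V -> Pl v) /\ Pl x /\ ~ chain V x /\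
      exists B, forall K : pset, connected K ->
        (forall z, K z -> Pl z /\ ~ chain V z) -> K x ->
        forall y, K y -> vnorm y <= B.

Definition is_edge (V : list vec3) (a b : vec3) : Prop :=
  exists i, (i < length V)%nat /\
    ((vtx V i = a /\ vtx V (nxt V i) = b) \/ (vtx V i = b /\ vtx V (nxt V i) = a)).

Definition share_edge (V W : list vec3) : Prop :=
  exists a b, is_edge V a b /\ is_edge W a b.

Definition polyhedron (P : pset) : Prop :=
  is_closed P /\ connected P /\ bounded P /\
  (* three-dimensional region: P is the closure of its interior *)
  (forall x, P x <-> closure (interior P) x) /\
  exists Fs : list (list vec3),
    (forall V, In V Fs -> simple_polygon V) /\
    (forall x, boundary P x <-> exists V, In V Fs /\ polygon_set V x) /\
    (forall i, (i < length Fs)%nat -> forall a b, is_edge (nth i Fs []) a b ->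
       exists j, (j < length Fs)%nat /\ j <> i /\ is_edge (nth j Fs []) a b /\
         forall k, (k < length Fs)%nat -> k <> i -> is_edge (nth k Fs []) a b -> k = j) /\
    (forall i j, (i < length Fs)%nat -> (j < length Fs)%nat -> i <> j ->
       forall x, polygon_set (nth i Fs []) x -> polygon_set (nth j Fs []) x ->
         (exists a b, is_edge (nth i Fs []) a b /\ is_edge (nth j Fs []) a b /\ on_seg a b x) \/
         (In x (nth i Fs []) /\ In x (nth j Fs []))) /\
    (forall v, (exists V, In V Fs /\ In v V) ->
       exists L : list nat, NoDup L /\
         (forall i, In i L <-> (i < length Fs)%nat /\ In v (nth i Fs [])) /\
         forall k, (k < length L)%nat ->
           share_edge (nth (nth k L O) Fs [])
                      (nth (nth (Nat.modulo (S k) (length L)) L O) Fs [])).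

Definition flat_pt (P : pset) : pset :=
  fun x => boundary P x /\ exists r Pl, 0 < r /\ is_plane Pl /\
    forall y, boundary P y -> dist x y < r -> Pl y.

Definition face (P : pset) (F : pset) : Prop :=
  exists C, conn_component (flat_pt P) C /\ forall x, F x <-> closure C x.

Definition plane_of (F Pl : pset) : Prop := is_plane Pl /\ forall x, F x -> Pl x.

Definition outward_normal (P F : pset) (n : vec3) : Prop :=
  vnorm n = 1 /\
  (exists Pl, plane_of F Pl /\ forall y z, Pl y -> Pl z -> dot n (vsub y z) = 0) /\
  forall x, F x -> flat_pt P x ->
    exists r, 0 < r /\ forall t, 0 < t < r ->
      ~ P (vadd x (vscale t n)) /\ P (vsub x (vscale t n)).

Definition pp_marker := (vec3 * pset)%type.
Definition pn_marker := (vec3 * vec3)%type.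

Definition valid_pp_marker (m : pp_marker) : Prop := is_plane (snd m) /\ snd m (fst m).
Definition valid_pn_marker (m : pn_marker) : Prop := vnorm (snd m) = 1.

Definition pp_markup (P : pset) (M : list pp_marker) : Prop :=
  (forall m, In m M -> valid_pp_marker m) /\
  (forall m, In m M -> exists F, face P F /\ F (fst m) /\ plane_of F (snd m)) /\
  (forall F, face P F -> exists m, In m M /\ F (fst m) /\ plane_of F (snd m)).

Definition pn_markup (P : pset) (M : list pn_marker) : Prop :=
  (forall m, In m M -> valid_pn_marker m) /\
  (forall m, In m M -> exists F, face P F /\ F (fst m) /\ outward_normal P F (snd m)) /\
  (forall F, face P F -> exists m, In m M /\ F (fst m) /\ outward_normal P F (snd m)).

(* Take P = [0,2]^3 minus the corner cube (1,2]^3, and Q = [0,2]^2 x [0,1] with the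
   column [0,1]^2 x [1,2] on top.  Both are non-convex and have nine maximal faces, one in
   each plane x, y, z = 0, 1, 2, with the same outward normal in both solids, and the points
   (0,0,0), (2,0,0), (0,2,0), (0,0,2), (1,1,1) lie on the corresponding faces of both; so the
   markers built from them are markups of P and of Q.

   Everything said about P and Q is a boolean combination of comparisons x_i <= k with
   integers k in [-1, 3].  Such a statement is constant on each cell of the integer grid,
   hence decided by evaluation at one point per cell; this checks the polyhedron axioms for
   an explicit list of axis-parallel rectangular and L-shaped faces.  The maximal faces are
   then the listed ones: a slab around the relative interior of each face meets no other
   face, so those points are flat, while any other boundary point lies on two faces of
   different directions, so the boundary is not contained in a plane near it. *)

From Stdlib Require Import Reals List Lra Lia Classical ZArith Bool.
Import ListNotations.
Open Scope R_scope.

(** * Euclidean topology in coordinates *)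

Inductive coord := CX | CY | CZ.

Definition coord_of (i : coord) (p : vec3) : R :=
  match i with CX => vx p | CY => vy p | CZ => vz p end.

Lemma coord_of_vadd i p q : coord_of i (vadd p q) = coord_of i p + coord_of i q.
Proof. destruct i; reflexivity. Qed.
Lemma coord_of_vsub i p q : coord_of i (vsub p q) = coord_of i p - coord_of i q.
Proof. destruct i; reflexivity. Qed.
Lemma coord_of_vscale i t p : coord_of i (vscale t p) = t * coord_of i p.
Proof. destruct i; reflexivity. Qed.

Lemma Rabs_le_sqrt_sum3 (a b c : R) : Rabs a <= sqrt (a*a + b*b + c*c).
Proof. rewrite <- sqrt_Rsqr_abs. apply sqrt_le_1_alt. unfold Rsqr. nra. Qed.

Lemma sqrt_sum3_le_Rabs (a b c : R) : sqrt (a*a + b*b + c*c) <= Rabs a + Rabs b + Rabs c.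
Proof.
  pose proof (Rabs_pos a); pose proof (Rabs_pos b); pose proof (Rabs_pos c).
  rewrite <- (sqrt_square (Rabs a + Rabs b + Rabs c)) by lra.
  apply sqrt_le_1_alt.
  assert (Rabs a * Rabs a = a * a) by (rewrite <- Rabs_mult; apply Rabs_pos_eq; nra).
  assert (Rabs b * Rabs b = b * b) by (rewrite <- Rabs_mult; apply Rabs_pos_eq; nra).
  assert (Rabs c * Rabs c = c * c) by (rewrite <- Rabs_mult; apply Rabs_pos_eq; nra).
  nra.
Qed.

Lemma norm_coord i p : Rabs (coord_of i p) <= vnorm p.
Proof.
  unfold vnorm, dot; destruct i; simpl.
  - apply Rabs_le_sqrt_sum3.
  - replace (vx p * vx p + vy p * vy p + vz p * vz p)
      with (vy p * vy p + vx p * vx p + vz p * vz p) by ring. apply Rabs_le_sqrt_sum3.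
  - replace (vx p * vx p + vy p * vy p + vz p * vz p)
      with (vz p * vz p + vx p * vx p + vy p * vy p) by ring. apply Rabs_le_sqrt_sum3.
Qed.

Lemma norm_le_sum_coords p : vnorm p <= Rabs (vx p) + Rabs (vy p) + Rabs (vz p).
Proof. apply sqrt_sum3_le_Rabs. Qed.

Lemma dist_coord i p q : Rabs (coord_of i p - coord_of i q) <= dist p q.
Proof. rewrite <- coord_of_vsub. apply norm_coord. Qed.

Lemma dist_le_sum_coords p q :
  dist p q <= Rabs (vx p - vx q) + Rabs (vy p - vy q) + Rabs (vz p - vz q).
Proof. apply norm_le_sum_coords. Qed.

Lemma dist_refl x : dist x x = 0.
Proof.
  unfold dist, vnorm, dot, vsub; simpl.
  replace ((vx x - vx x) * (vx x - vx x) + (vy x - vy x) * (vy x - vy x)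
           + (vz x - vz x) * (vz x - vz x)) with 0 by ring.
  apply sqrt_0.
Qed.

Definition lipschitz (f : vec3 -> R) := forall p q, Rabs (f p - f q) <= dist p q.

Lemma lipschitz_coord i : lipschitz (coord_of i).
Proof. intros p q; apply dist_coord. Qed.

Lemma is_open_True : is_open (fun _ => True).
Proof. intros x _. exists 1; split; [lra|auto]. Qed.

Lemma is_open_False : is_open (fun _ => False).
Proof. intros x []. Qed.

Lemma is_open_and (U V : pset) : is_open U -> is_open V -> is_open (fun x => U x /\ V x).
Proof.
  intros HU HV x [Ux Vx].
  destruct (HU x Ux) as [r1 [h1 H1]], (HV x Vx) as [r2 [h2 H2]].
  exists (Rmin r1 r2). split; [apply Rmin_glb_lt; auto|].
  pose proof (Rmin_l r1 r2); pose proof (Rmin_r r1 r2).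
  intros y hy. split; [apply H1|apply H2]; lra.
Qed.

Lemma is_open_or (U V : pset) : is_open U -> is_open V -> is_open (fun x => U x \/ V x).
Proof.
  intros HU HV x [Ux|Vx]; [destruct (HU x Ux) as [r [hr H]]|destruct (HV x Vx) as [r [hr H]]];
    exists r; split; auto.
Qed.

Lemma is_open_exists {A} (P : A -> Prop) (U : A -> pset) :
  (forall a, is_open (U a)) -> is_open (fun p => exists a, P a /\ U a p).
Proof.
  intros H x [a [ha Ux]]. destruct (H a x Ux) as [r [hr Hr]].
  exists r. split; auto. intros y hy. exists a; split; auto.
Qed.

Lemma is_open_lt (f : vec3 -> R) c : lipschitz f -> is_open (fun p => f p < c).
Proof.
  intros Hf x hx. exists (c - f x). split; [lra|]. intros y hy.
  pose proof (Hf x y) as Hxy. rewrite Rabs_minus_sym in Hxy.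
  pose proof (Rle_abs (f y - f x)). lra.
Qed.

Lemma is_open_gt (f : vec3 -> R) c : lipschitz f -> is_open (fun p => c < f p).
Proof.
  intros Hf x hx. exists (f x - c). split; [lra|]. intros y hy.
  pose proof (Hf x y); pose proof (Rle_abs (f x - f y)). lra.
Qed.

Lemma is_open_compl (S : pset) : is_closed S -> is_open (fun x => ~ S x).
Proof.
  intros HS x nSx. apply NNPP. intro Hn. apply nSx, HS. intros r hr.
  apply NNPP. intro Hr. apply Hn. exists r. split; auto.
  intros y hy Sy. apply Hr. exists y; auto.
Qed.

Lemma is_closed_True : is_closed (fun _ => True).
Proof. intros x _; auto. Qed.

Lemma is_closed_False : is_closed (fun _ => False).
Proof. intros x H. destruct (H 1) as [y [[] _]]. lra. Qed.

Lemma is_closed_le (f : vec3 -> R) c : lipschitz f -> is_closed (fun p => f p <= c).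
Proof.
  intros Hf x Hx. apply Rnot_lt_le. intro Hc.
  destruct (Hx (f x - c)) as [y [Hy Hd]]; [lra|].
  pose proof (Hf x y); pose proof (Rle_abs (f x - f y)). lra.
Qed.

Lemma is_closed_ge (f : vec3 -> R) c : lipschitz f -> is_closed (fun p => c <= f p).
Proof.
  intros Hf x Hx. apply Rnot_lt_le. intro Hc.
  destruct (Hx (c - f x)) as [y [Hy Hd]]; [lra|].
  pose proof (Hf x y) as Hxy. rewrite Rabs_minus_sym in Hxy.
  pose proof (Rle_abs (f y - f x)). lra.
Qed.

Lemma is_closed_and (U V : pset) : is_closed U -> is_closed V -> is_closed (fun x => U x /\ V x).
Proof.
  intros HU HV x Hx. split; [apply HU|apply HV];
    intros r hr; destruct (Hx r hr) as [y [[Uy Vy] D]]; exists y; auto.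
Qed.

Lemma is_closed_or (U V : pset) : is_closed U -> is_closed V -> is_closed (fun x => U x \/ V x).
Proof.
  intros HU HV x Hx. apply NNPP. intros HUV. apply not_or_and in HUV as [nU nV].
  destruct (is_open_compl U HU x nU) as [r1 [h1 H1]].
  destruct (is_open_compl V HV x nV) as [r2 [h2 H2]].
  pose proof (Rmin_l r1 r2); pose proof (Rmin_r r1 r2).
  destruct (Hx (Rmin r1 r2)) as [y [[Uy|Vy] D]]; [apply Rmin_glb_lt; auto| |].
  - apply (H1 y); auto; lra.
  - apply (H2 y); auto; lra.
Qed.

Lemma closure_subset (S : pset) x : S x -> closure S x.
Proof. intros Sx r hr. exists x. rewrite dist_refl. auto. Qed.

Lemma closure_mono (S T : pset) : (forall x, S x -> T x) -> forall x, closure S x -> closure T x.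
Proof. intros H x Hx r hr. destruct (Hx r hr) as [y [Sy D]]. exists y; auto. Qed.

Lemma closure_ext (A B : pset) : (forall x, A x <-> B x) -> forall x, closure A x <-> closure B x.
Proof. intros H x. split; apply closure_mono; intro y; apply H. Qed.

Lemma interior_subset (S : pset) x : interior S x -> S x.
Proof. intros [r [hr H]]. apply H. rewrite dist_refl. auto. Qed.

Lemma open_subset_interior (U S : pset) :
  is_open U -> (forall x, U x -> S x) -> forall x, U x -> interior S x.
Proof. intros HU HS x Ux. destruct (HU x Ux) as [r [hr H]]. exists r; split; auto. Qed.

(** * Connectedness *)

Definition seg_point (a b : vec3) (t : R) : vec3 := vadd a (vscale t (vsub b a)).

Lemma seg_point_close a b r : 0 < r ->
  exists d, 0 < d /\ forall s t, Rabs (s - t) <= d -> dist (seg_point a b s) (seg_point a b t) < r.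
Proof.
  intro hr.
  set (L := Rabs (vx b - vx a) + Rabs (vy b - vy a) + Rabs (vz b - vz a)).
  assert (hL : 0 <= L)
    by (unfold L; pose proof (Rabs_pos (vx b - vx a)); pose proof (Rabs_pos (vy b - vy a));
        pose proof (Rabs_pos (vz b - vz a)); lra).
  exists (r / (L + 1)). split; [apply Rdiv_lt_0_compat; lra|]. intros s t hst.
  eapply Rle_lt_trans; [apply dist_le_sum_coords|]. unfold seg_point, vadd, vscale, vsub; simpl.
  replace (vx a + s * (vx b - vx a) - (vx a + t * (vx b - vx a))) with ((s - t) * (vx b - vx a)) by ring.
  replace (vy a + s * (vy b - vy a) - (vy a + t * (vy b - vy a))) with ((s - t) * (vy b - vy a)) by ring.
  replace (vz a + s * (vz b - vz a) - (vz a + t * (vz b - vz a))) with ((s - t) * (vz b - vz a)) by ring.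
  rewrite !Rabs_mult.
  assert (Rabs (s - t) * L <= r / (L + 1) * L) by (apply Rmult_le_compat_r; lra).
  assert (r / (L + 1) * L < r).
  { apply (Rmult_lt_reg_r (L + 1)); [lra|]. unfold Rdiv.
    replace (r * / (L + 1) * L * (L + 1)) with (r * L) by (field; lra). nra. }
  unfold L in *. lra.
Qed.

(* A supremum argument: the last parameter up to which the segment stays in U
   can be neither in U nor in V. *)
Lemma segment_not_split (U V : pset) a b :
  is_open U -> is_open V ->
  (forall t, 0 <= t <= 1 -> U (seg_point a b t) \/ V (seg_point a b t)) ->
  (forall t, 0 <= t <= 1 -> U (seg_point a b t) -> V (seg_point a b t) -> False) ->
  U a -> V b -> False.
Proof.
  intros HU HV Hcov Hdis Ua Vb. set (g := seg_point a b).
  assert (Hg0 : g 0 = a)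
    by (unfold g, seg_point; destruct a, b; unfold vadd, vscale, vsub; simpl; f_equal; ring).
  assert (Hg1 : g 1 = b)
    by (unfold g, seg_point; destruct a, b; unfold vadd, vscale, vsub; simpl; f_equal; ring).
  set (E := fun t => 0 <= t <= 1 /\ forall s, 0 <= s <= t -> U (g s)).
  assert (HE0 : E 0) by (split; [lra|intros s hs; replace s with 0 by lra; congruence]).
  assert (HEb : bound E) by (exists 1; intros t [ht _]; lra).
  destruct (completeness E HEb (ex_intro _ 0 HE0)) as [m [Hub Hlub]].
  assert (Hm : 0 <= m <= 1) by (split; [apply Hub; auto|apply Hlub; intros t [ht _]; lra]).
  assert (Hbelow : forall s, 0 <= s < m -> U (g s)).
  { intros s hs. apply NNPP; intro nU.
    assert (is_upper_bound E s) by (intros t [_ Et]; apply Rnot_lt_le; intro; apply nU, Et; lra).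
    pose proof (Hlub s H). lra. }
  destruct (Hcov m Hm) as [Um|Vm].
  - destruct (Req_dec m 1) as [->|ne]; [exact (Hdis 1 ltac:(lra) Um ltac:(fold g; congruence))|].
    destruct (HU (g m) Um) as [r [hr Hr]]. destruct (seg_point_close a b r hr) as [d [hd Hd]].
    pose proof (Rmin_l 1 (m + d)); pose proof (Rmin_r 1 (m + d)).
    assert (m < Rmin 1 (m + d)) by (apply Rmin_glb_lt; lra).
    set (t := Rmin 1 (m + d)) in *.
    assert (Et : E t).
    { split; [lra|]. intros s hs. destruct (Rlt_le_dec s m); [apply Hbelow; lra|].
      apply Hr, Hd. rewrite Rabs_minus_sym, Rabs_pos_eq; lra. }
    pose proof (Hub t Et). lra.
  - destruct (Req_dec m 0) as [->|ne]; [exact (Hdis 0 ltac:(lra) ltac:(fold g; congruence) Vm)|].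
    destruct (HV (g m) Vm) as [r [hr Hr]]. destruct (seg_point_close a b r hr) as [d [hd Hd]].
    pose proof (Rmax_l 0 (m - d)); pose proof (Rmax_r 0 (m - d)).
    assert (Rmax 0 (m - d) < m) by (apply Rmax_lub_lt; lra).
    set (s := Rmax 0 (m - d)) in *.
    apply (Hdis s); [lra|apply Hbelow; lra|].
    apply Hr, Hd. rewrite Rabs_pos_eq; lra.
Qed.

Lemma convex_connected (S : pset) : convex S -> connected S.
Proof.
  intros Hc U V HU HV Hcov Hdis.
  apply NNPP. intros Hsplit. apply not_or_and in Hsplit as [HnU HnV].
  apply not_all_ex_not in HnU as [a HnU]. apply not_all_ex_not in HnV as [b HnV].
  apply imply_to_and in HnU as [Sa Ua]. apply imply_to_and in HnV as [Sb Vb].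
  apply NNPP in Ua. apply NNPP in Vb.
  apply (segment_not_split U V a b HU HV); auto;
    intros t ht; [apply Hcov|apply Hdis]; apply Hc; auto.
Qed.

Lemma connected_ext (A B : pset) : (forall x, A x <-> B x) -> connected A -> connected B.
Proof.
  intros E H U V HU HV Hc Hd.
  destruct (H U V HU HV) as [H1|H1].
  - intros x Ax; apply Hc, E; auto.
  - intros x Ax; apply Hd, E; auto.
  - left; intros x Bx; apply H1, E; auto.
  - right; intros x Bx; apply H1, E; auto.
Qed.

Lemma connected_union (A B : pset) : connected A -> connected B -> (exists x, A x /\ B x) ->
  connected (fun x => A x \/ B x).
Proof.
  intros HA HB [x0 [A0 B0]] U V HU HV Hc Hd.
  destruct (HA U V HU HV (fun x h => Hc x (or_introl h)) (fun x h => Hd x (or_introl h))) as [H1|H1];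
  destruct (HB U V HU HV (fun x h => Hc x (or_intror h)) (fun x h => Hd x (or_intror h))) as [H2|H2].
  - left. intros x [h|h]; auto.
  - exfalso. destruct (Hc x0 (or_introl A0)); [apply (H1 x0)|apply (H2 x0)]; auto.
  - exfalso. destruct (Hc x0 (or_introl A0)); [apply (H2 x0)|apply (H1 x0)]; auto.
  - right. intros x [h|h]; auto.
Qed.

Lemma connected_stays_in (K U V : pset) : connected K -> is_open U -> is_open V ->
  (forall x, K x -> U x \/ V x) -> (forall x, K x -> U x -> V x -> False) ->
  forall x0, K x0 -> U x0 -> forall y, K y -> U y.
Proof.
  intros HK HU HV Hc Hd x0 K0 U0 y Ky.
  destruct (HK U V HU HV Hc Hd) as [H|H]; [exfalso; apply (H x0); auto|].
  destruct (Hc y Ky); auto. exfalso; apply (H y); auto.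
Qed.

(** * Box formulas and their decision procedure *)

(* Every
   atom has its integer in [-1, 3], so the truth value of a formula is constant
   on each cell of the grid that the lines [x_i = -1, ..., 3] cut R^3 into;
   validity is decided by evaluating on one symbolic point per cell. *)
Inductive form := FT | FF | FGe (i : coord) (a : Z) | FLe (i : coord) (b : Z)
  | FGt (i : coord) (a : Z) | FLt (i : coord) (b : Z) | FEq (i : coord) (c : Z)
  | FAnd (f g : form) | FOr (f g : form) | FNot (f : form).

Fixpoint holds (f : form) (p : vec3) : Prop :=
  match f with
  | FT => True | FF => False
  | FGe i a => IZR a <= coord_of i p
  | FLe i b => coord_of i p <= IZR b
  | FGt i a => IZR a < coord_of i p
  | FLt i b => coord_of i p < IZR b
  | FEq i c => coord_of i p = IZR c
  | FAnd f g => holds f p /\ holds g p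
  | FOr f g => holds f p \/ holds g p
  | FNot f => ~ holds f p
  end.

Definition FImp (f g : form) := FOr (FNot f) g.
Definition FIff (f g : form) := FAnd (FImp f g) (FImp g f).
Fixpoint FOrs (l : list form) : form := match l with [] => FF | f :: l' => FOr f (FOrs l') end.

Lemma holds_FOrs_map {A} (F : A -> form) (l : list A) x :
  holds (FOrs (map F l)) x <-> exists a, In a l /\ holds (F a) x.
Proof.
  induction l as [|a l IH]; simpl; [split; [intros []|intros [a [[] _]]]|].
  rewrite IH. split.
  - intros [H|[b [hb H]]]; [exists a|exists b]; auto.
  - intros [b [[<-|hb] H]]; [left|right; exists b]; auto.
Qed.

Definition grid_lo : Z := (-1)%Z.
Definition grid_hi : Z := 3%Z.

Inductive cell := Below | Pt (n : Z) | Iv (n : Z) | Above.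

Definition in_cell (c : cell) (r : R) : Prop :=
  match c with
  | Below => r < IZR grid_lo
  | Pt n => r = IZR n
  | Iv n => IZR n < r < IZR (n + 1)
  | Above => IZR grid_hi < r
  end.

Definition cell_ge (a : Z) (c : cell) : bool :=
  match c with Below => false | Pt n => (a <=? n)%Z | Iv n => (a <=? n)%Z | Above => true end.
Definition cell_le (b : Z) (c : cell) : bool :=
  match c with Below => true | Pt n => (n <=? b)%Z | Iv n => (n + 1 <=? b)%Z | Above => false end.
Definition cell_gt (a : Z) (c : cell) : bool :=
  match c with Below => false | Pt n => (a <? n)%Z | Iv n => (a <=? n)%Z | Above => true end.
Definition cell_lt (b : Z) (c : cell) : bool :=
  match c with Below => true | Pt n => (n <? b)%Z | Iv n => (n + 1 <=? b)%Z | Above => false end.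
Definition cell_eq (k : Z) (c : cell) : bool :=
  match c with Pt n => (n =? k)%Z | _ => false end.

Definition cell3 := (cell * cell * cell)%type.

Definition cell_at (i : coord) (c : cell3) : cell :=
  match i with CX => fst (fst c) | CY => snd (fst c) | CZ => snd c end.

Definition in_cell3 (c : cell3) (p : vec3) : Prop :=
  in_cell (cell_at CX c) (vx p) /\ in_cell (cell_at CY c) (vy p) /\ in_cell (cell_at CZ c) (vz p).

Fixpoint holds_cell (f : form) (c : cell3) : bool :=
  match f with
  | FT => true | FF => false
  | FGe i a => cell_ge a (cell_at i c)
  | FLe i b => cell_le b (cell_at i c)
  | FGt i a => cell_gt a (cell_at i c)
  | FLt i b => cell_lt b (cell_at i c)
  | FEq i k => cell_eq k (cell_at i c)
  | FAnd f g => holds_cell f c && holds_cell g c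
  | FOr f g => holds_cell f c || holds_cell g c
  | FNot f => negb (holds_cell f c)
  end.

Definition on_grid (a : Z) : bool := (grid_lo <=? a)%Z && (a <=? grid_hi)%Z.

Fixpoint form_on_grid (f : form) : bool :=
  match f with
  | FT | FF => true
  | FGe _ a | FLe _ a | FGt _ a | FLt _ a | FEq _ a => on_grid a
  | FAnd f g | FOr f g => form_on_grid f && form_on_grid g
  | FNot f => form_on_grid f
  end.

Lemma on_grid_bounds a : on_grid a = true -> IZR grid_lo <= IZR a <= IZR grid_hi.
Proof.
  unfold on_grid. rewrite andb_true_iff, !Z.leb_le. intros [H1 H2]. split; apply IZR_le; auto.
Qed.

Ltac zcases := repeat match goal with
  | |- context [(?a <=? ?b)%Z] => destruct (Z.leb_spec a b)
  | |- context [(?a <? ?b)%Z] => destruct (Z.ltb_spec a b)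
  | |- context [(?a =? ?b)%Z] => destruct (Z.eqb_spec a b)
  end.

Ltac z_to_R := repeat match goal with
  | H : (?x < ?y)%Z |- _ =>
      let H' := fresh in assert (H' : (x + 1 <= y)%Z) by lia; clear H;
      apply IZR_le in H'; rewrite plus_IZR in H'
  | H : (?x <= ?y)%Z |- _ => apply IZR_le in H
  | H : (?x = ?y)%Z |- _ => subst
  end.

Ltac cell_cases :=
  intros Ha Hc; match goal with cc : cell |- _ => destruct cc end; simpl in *; zcases; z_to_R;
  try rewrite plus_IZR in *; split; intro; try discriminate; auto; try lra.

Lemma cell_ge_spec a c r : IZR grid_lo <= IZR a <= IZR grid_hi -> in_cell c r ->
  (cell_ge a c = true <-> IZR a <= r).
Proof. cell_cases. Qed.
Lemma cell_le_spec b c r : IZR grid_lo <= IZR b <= IZR grid_hi -> in_cell c r ->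
  (cell_le b c = true <-> r <= IZR b).
Proof. cell_cases. Qed.
Lemma cell_gt_spec a c r : IZR grid_lo <= IZR a <= IZR grid_hi -> in_cell c r ->
  (cell_gt a c = true <-> IZR a < r).
Proof. cell_cases. Qed.
Lemma cell_lt_spec b c r : IZR grid_lo <= IZR b <= IZR grid_hi -> in_cell c r ->
  (cell_lt b c = true <-> r < IZR b).
Proof. cell_cases. Qed.
Lemma cell_eq_spec k c r : IZR grid_lo <= IZR k <= IZR grid_hi -> in_cell c r ->
  (cell_eq k c = true <-> r = IZR k).
Proof.
  cell_cases.
  - exfalso; apply n0; apply eq_IZR; lra.
  - exfalso. destruct Hc as [Hn Hn1]. subst r.
    assert (H1 : IZR n < IZR k) by lra. assert (H2 : IZR k < IZR (n + 1)) by (rewrite plus_IZR; lra).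
    apply lt_IZR in H1, H2. lia.
Qed.

Lemma in_cell_at i c p : in_cell3 c p -> in_cell (cell_at i c) (coord_of i p).
Proof. intros [H1 [H2 H3]]. destruct i; simpl; auto. Qed.

Theorem holds_cell_spec f c p :
  form_on_grid f = true -> in_cell3 c p -> (holds_cell f c = true <-> holds f p).
Proof.
  intros Hok Hc. induction f; simpl in *.
  - split; auto.
  - split; intro H; [discriminate|contradiction].
  - apply cell_ge_spec; [apply on_grid_bounds|apply in_cell_at]; auto.
  - apply cell_le_spec; [apply on_grid_bounds|apply in_cell_at]; auto.
  - apply cell_gt_spec; [apply on_grid_bounds|apply in_cell_at]; auto.
  - apply cell_lt_spec; [apply on_grid_bounds|apply in_cell_at]; auto.
  - apply cell_eq_spec; [apply on_grid_bounds|apply in_cell_at]; auto.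
  - apply andb_true_iff in Hok as [H1 H2]. rewrite andb_true_iff, IHf1, IHf2 by auto. tauto.
  - apply andb_true_iff in Hok as [H1 H2]. rewrite orb_true_iff, IHf1, IHf2 by auto. tauto.
  - rewrite negb_true_iff, <- IHf by auto. destruct (holds_cell f c); intuition congruence.
Qed.

Definition grid_cells : list cell :=
  [Below; Pt (-1); Iv (-1); Pt 0; Iv 0; Pt 1; Iv 1; Pt 2; Iv 2; Pt 3; Above].

Lemma grid_cells_cover r : exists c, In c grid_cells /\ in_cell c r.
Proof.
  unfold grid_cells, in_cell, grid_lo, grid_hi.
  destruct (Rlt_le_dec r (-1)); [exists Below; simpl; auto|].
  destruct (Req_dec r (-1)); [exists (Pt (-1)); simpl; auto 20|].
  destruct (Rlt_le_dec r 0); [exists (Iv (-1)); simpl; split; auto 20; lra|].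
  destruct (Req_dec r 0); [exists (Pt 0); simpl; auto 20|].
  destruct (Rlt_le_dec r 1); [exists (Iv 0); simpl; split; auto 20; lra|].
  destruct (Req_dec r 1); [exists (Pt 1); simpl; auto 20|].
  destruct (Rlt_le_dec r 2); [exists (Iv 1); simpl; split; auto 20; lra|].
  destruct (Req_dec r 2); [exists (Pt 2); simpl; auto 20|].
  destruct (Rlt_le_dec r 3); [exists (Iv 2); simpl; split; auto 20; lra|].
  destruct (Req_dec r 3); [exists (Pt 3); simpl; auto 20|].
  exists Above; simpl; split; auto 20; lra.
Qed.

Definition grid_cells3 : list cell3 :=
  flat_map (fun a => flat_map (fun b => map (fun c => (a, b, c)) grid_cells) grid_cells) grid_cells.

Lemma grid_cells3_cover p : exists c, In c grid_cells3 /\ in_cell3 c p.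
Proof.
  destruct (grid_cells_cover (vx p)) as [a [Ha Sa]], (grid_cells_cover (vy p)) as [b [Hb Sb]],
    (grid_cells_cover (vz p)) as [c [Hc Sc]].
  exists (a, b, c). split; [|unfold in_cell3; simpl; auto].
  apply in_flat_map. exists a. split; auto.
  apply in_flat_map. exists b. split; auto. apply in_map; auto.
Qed.

Definition valid (f : form) : bool := form_on_grid f && forallb (holds_cell f) grid_cells3.

Theorem valid_sound f : valid f = true -> forall p, holds f p.
Proof.
  unfold valid. rewrite andb_true_iff, forallb_forall. intros [Hok Hall] p.
  destruct (grid_cells3_cover p) as [c [Hin Hs]].
  apply (holds_cell_spec f c p Hok Hs), Hall; auto.
Qed.

Fixpoint closed_form (f : form) : bool :=
  match f with
  | FT | FF | FGe _ _ | FLe _ _ | FEq _ _ => true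
  | FAnd f g | FOr f g => closed_form f && closed_form g
  | _ => false
  end.
Fixpoint open_form (f : form) : bool :=
  match f with
  | FT | FF | FGt _ _ | FLt _ _ => true
  | FAnd f g | FOr f g => open_form f && open_form g
  | _ => false
  end.

Lemma closed_form_closed f : closed_form f = true -> is_closed (holds f).
Proof.
  induction f; simpl; intro H; try discriminate.
  - apply is_closed_True.
  - apply is_closed_False.
  - apply is_closed_ge, lipschitz_coord.
  - apply is_closed_le, lipschitz_coord.
  - intros x Hx. apply Rle_antisym;
      [apply (is_closed_le _ _ (lipschitz_coord i))|apply (is_closed_ge _ _ (lipschitz_coord i))];
      intros r hr; destruct (Hx r hr) as [y [Hy D]]; exists y; split; auto; lra.
  - apply andb_true_iff in H as [H1 H2]. apply is_closed_and; auto.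
  - apply andb_true_iff in H as [H1 H2]. apply is_closed_or; auto.
Qed.

Lemma open_form_open f : open_form f = true -> is_open (holds f).
Proof.
  induction f; simpl; intro H; try discriminate.
  - apply is_open_True.
  - apply is_open_False.
  - apply is_open_gt, lipschitz_coord.
  - apply is_open_lt, lipschitz_coord.
  - apply andb_true_iff in H as [H1 H2]. apply is_open_and; auto.
  - apply andb_true_iff in H as [H1 H2]. apply is_open_or; auto.
Qed.

(** * Polygon regions *)

Lemma vec_ext_coords i j k x y : i <> j -> j <> k -> i <> k ->
  coord_of i x = coord_of i y -> coord_of j x = coord_of j y -> coord_of k x = coord_of k y -> x = y.
Proof. destruct i, j, k, x, y; simpl; intros; subst; congruence. Qed.

Definition ray (x c0 : vec3) : pset :=
  fun y => exists t, 0 <= t /\ y = vadd x (vscale t (vsub x c0)).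

Lemma ray_convex x c0 : convex (ray x c0).
Proof.
  intros y1 y2 [t1 [h1 ->]] [t2 [h2 ->]] s hs. exists (t1 + s * (t2 - t1)). split; [nra|].
  destruct x, c0. unfold vadd, vscale, vsub; simpl. f_equal; ring.
Qed.

Lemma ray_unbounded x c0 : x <> c0 -> forall B, exists y, ray x c0 y /\ B < vnorm y.
Proof.
  intros nx B.
  assert (Hi : exists i, coord_of i x <> coord_of i c0).
  { apply NNPP. intro H. apply nx.
    apply (vec_ext_coords CX CY CZ); try discriminate; apply NNPP; intro; apply H; eexists; eauto. }
  destruct Hi as [i hi].
  set (d := Rabs (coord_of i x - coord_of i c0)). assert (hd : 0 < d) by (apply Rabs_pos_lt; lra).
  set (t := (Rabs B + Rabs (coord_of i x) + 1) / d).
  assert (ht : 0 <= t)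
    by (unfold t; apply Rmult_le_pos; [pose proof (Rabs_pos B); pose proof (Rabs_pos (coord_of i x)); lra
                                      |left; apply Rinv_0_lt_compat; auto]).
  exists (vadd x (vscale t (vsub x c0))). split; [exists t; auto|].
  eapply Rlt_le_trans; [|apply (norm_coord i)].
  rewrite coord_of_vadd, coord_of_vscale, coord_of_vsub.
  assert (Hgrow : Rabs (t * (coord_of i x - coord_of i c0)) = Rabs B + Rabs (coord_of i x) + 1)
    by (rewrite Rabs_mult, (Rabs_pos_eq t) by lra; fold d; unfold t; field; lra).
  pose proof (Rabs_triang_inv (t * (coord_of i x - coord_of i c0)) (- coord_of i x)) as Htri.
  replace (t * (coord_of i x - coord_of i c0) - - coord_of i x)
    with (coord_of i x + t * (coord_of i x - coord_of i c0)) in Htri by ring.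
  rewrite Rabs_Ropp in Htri. pose proof (Rle_abs B). lra.
Qed.

(* Points of [pl] outside [RC] escape to infinity along the ray away from [c0]. *)
Lemma polygon_set_char (V : list vec3) (pl RC Inn : pset) (c0 : vec3)
  (Hpl : forall Pl, is_plane Pl -> (forall v, In v V -> Pl v) -> forall x, Pl x <-> pl x)
  (Hplane : is_plane pl) (HplV : forall v, In v V -> pl v)
  (Hpl_affine : forall x y t, pl x -> pl y -> pl (vadd x (vscale t (vsub x y))))
  (Hchain : forall x, chain V x -> pl x /\ RC x)
  (HRC : is_closed RC) (HInn : is_open Inn) (HInnRC : forall x, Inn x -> RC x)
  (HInn_bounded : exists B, forall x, pl x -> Inn x -> vnorm x <= B)
  (Hfill : forall x, pl x -> RC x -> ~ chain V x -> Inn x)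
  (Hc0 : pl c0 /\ RC c0)
  (Hstar : forall y, pl y -> RC y -> forall s, 0 <= s <= 1 -> RC (vadd c0 (vscale s (vsub y c0)))) :
  forall x, polygon_set V x <-> pl x /\ RC x.
Proof.
  intro x. split.
  - intros [Hc|[Pl [HPl [HV [Plx [nch [B HB]]]]]]]; [apply Hchain; auto|].
    assert (plx : pl x) by (apply (Hpl Pl); auto). split; auto.
    apply NNPP. intro nRC.
    assert (nx : x <> c0) by (intros ->; tauto).
    assert (Hray_out : forall y, ray x c0 y -> pl y /\ ~ RC y).
    { intros y [t [ht ->]]. split; [apply Hpl_affine; tauto|]. intro RCy. apply nRC.
      replace x with (vadd c0 (vscale (/ (1 + t)) (vsub (vadd x (vscale t (vsub x c0))) c0)))
        by (destruct x, c0; unfold vadd, vscale, vsub; simpl; f_equal; field; lra).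
      apply Hstar; [apply Hpl_affine; tauto|auto|].
      split; [left; apply Rinv_0_lt_compat; lra|].
      rewrite <- Rinv_1. apply Rinv_le_contravar; lra. }
    assert (Hbound : forall y, ray x c0 y -> vnorm y <= B).
    { apply (HB (ray x c0) (convex_connected _ (ray_convex x c0))).
      - intros z Kz. destruct (Hray_out z Kz) as [plz nz].
        split; [apply (Hpl Pl); auto|]. intro cz. apply nz, Hchain; auto.
      - exists 0. split; [lra|]. destruct x, c0; unfold vadd, vscale, vsub; simpl; f_equal; ring. }
    destruct (ray_unbounded x c0 nx B) as [y [Ky Hy]]. pose proof (Hbound y Ky). lra.
  - intros [plx RCx]. destruct (classic (chain V x)) as [ch|nch]; [left; auto|right].
    exists pl. do 4 (split; auto).
    destruct HInn_bounded as [B HB]. exists B. intros K HK Kin Kx y Ky.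
    apply HB; [apply Kin; auto|].
    apply (connected_stays_in K Inn (fun z => ~ RC z) HK HInn (is_open_compl RC HRC)) with x; auto.
    intros z Kz. destruct (Kin z Kz) as [plz nz]. destruct (classic (RC z)); [left|right]; auto.
Qed.

(* The plane [coord_of a p = c] is coordinatised by the two other axes. *)
Definition axis_u (a : coord) := match a with CX => CY | CY => CX | CZ => CX end.
Definition axis_v (a : coord) := match a with CX => CZ | CY => CZ | CZ => CY end.
Definition axis_point (a : coord) (c u v : R) : vec3 :=
  match a with CX => mkv c u v | CY => mkv u c v | CZ => mkv u v c end.

Lemma coord_of_axis_point_n a c u v : coord_of a (axis_point a c u v) = c.
Proof. destruct a; reflexivity. Qed.
Lemma coord_of_axis_point_u a c u v : coord_of (axis_u a) (axis_point a c u v) = u.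
Proof. destruct a; reflexivity. Qed.
Lemma coord_of_axis_point_v a c u v : coord_of (axis_v a) (axis_point a c u v) = v.
Proof. destruct a; reflexivity. Qed.

Ltac axis_simpl := rewrite ?coord_of_axis_point_n, ?coord_of_axis_point_u, ?coord_of_axis_point_v in *.

Lemma axes_distinct a : axis_u a <> a /\ axis_v a <> a /\ axis_u a <> axis_v a.
Proof. destruct a; simpl; repeat split; discriminate. Qed.

Lemma vec_ext_axes a x y : coord_of a x = coord_of a y ->
  coord_of (axis_u a) x = coord_of (axis_u a) y -> coord_of (axis_v a) x = coord_of (axis_v a) y ->
  x = y.
Proof. destruct (axes_distinct a) as [h1 [h2 h3]]. apply vec_ext_coords; auto. Qed.

Lemma axis_other i a : i <> a -> i = axis_u a \/ i = axis_v a.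
Proof. destruct i, a; simpl; intro h; auto; congruence. Qed.

Lemma on_seg_coords p q x : on_seg p q x ->
  exists t, 0 <= t <= 1 /\ forall i, coord_of i x = coord_of i p + t * (coord_of i q - coord_of i p).
Proof.
  intros [t [ht ->]]. exists t. split; auto. intro i.
  rewrite coord_of_vadd, coord_of_vscale, coord_of_vsub. ring.
Qed.

Lemma on_seg_coord_le i p q x : on_seg p q x -> coord_of i p <= coord_of i q ->
  coord_of i p <= coord_of i x <= coord_of i q.
Proof. intros H h. destruct (on_seg_coords p q x H) as [t [ht ->]]. split; nra. Qed.

Lemma on_seg_coord_ge i p q x : on_seg p q x -> coord_of i q <= coord_of i p ->
  coord_of i q <= coord_of i x <= coord_of i p.
Proof. intros H h. destruct (on_seg_coords p q x H) as [t [ht ->]]. split; nra. Qed.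

Lemma on_seg_along i j k p q x : i <> j -> j <> k -> i <> k ->
  coord_of j p = coord_of j q -> coord_of k p = coord_of k q -> coord_of i p <> coord_of i q ->
  coord_of j x = coord_of j p -> coord_of k x = coord_of k p ->
  (coord_of i p <= coord_of i x <= coord_of i q \/ coord_of i q <= coord_of i x <= coord_of i p) ->
  on_seg p q x.
Proof.
  intros hij hjk hik hj hk hi hxj hxk hx.
  set (d := coord_of i q - coord_of i p). assert (hd : d <> 0) by (unfold d; lra).
  exists ((coord_of i x - coord_of i p) / d). split.
  - destruct (Rlt_le_dec 0 d).
    + split; [apply Rmult_le_pos; [unfold d in *; lra|left; apply Rinv_0_lt_compat; lra]|].
      apply (Rmult_le_reg_r d); auto. unfold Rdiv. rewrite Rmult_assoc, Rinv_l by lra.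
      unfold d in *; lra.
    + replace ((coord_of i x - coord_of i p) / d) with ((coord_of i p - coord_of i x) / (- d))
        by (field; lra).
      split; [apply Rmult_le_pos; [unfold d in *; lra|left; apply Rinv_0_lt_compat; lra]|].
      apply (Rmult_le_reg_r (- d)); [lra|]. unfold Rdiv. rewrite Rmult_assoc, Rinv_l by lra.
      unfold d in *; lra.
  - apply (vec_ext_coords i j k); auto; rewrite coord_of_vadd, coord_of_vscale, coord_of_vsub.
    + unfold d. field. exact hd.
    + rewrite hxj, hj. ring.
    + rewrite hxk, hk. ring.
Qed.

Lemma on_seg_along_u a p q x :
  coord_of a p = coord_of a q -> coord_of (axis_v a) p = coord_of (axis_v a) q ->
  coord_of (axis_u a) p <> coord_of (axis_u a) q ->
  coord_of a x = coord_of a p -> coord_of (axis_v a) x = coord_of (axis_v a) p ->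
  (coord_of (axis_u a) p <= coord_of (axis_u a) x <= coord_of (axis_u a) q \/
   coord_of (axis_u a) q <= coord_of (axis_u a) x <= coord_of (axis_u a) p) ->
  on_seg p q x.
Proof. destruct (axes_distinct a) as [h1 [h2 h3]]. apply on_seg_along; auto. Qed.

Lemma on_seg_along_v a p q x :
  coord_of a p = coord_of a q -> coord_of (axis_u a) p = coord_of (axis_u a) q ->
  coord_of (axis_v a) p <> coord_of (axis_v a) q ->
  coord_of a x = coord_of a p -> coord_of (axis_u a) x = coord_of (axis_u a) p ->
  (coord_of (axis_v a) p <= coord_of (axis_v a) x <= coord_of (axis_v a) q \/
   coord_of (axis_v a) q <= coord_of (axis_v a) x <= coord_of (axis_v a) p) ->
  on_seg p q x.
Proof. destruct (axes_distinct a) as [h1 [h2 h3]]. apply on_seg_along; auto. Qed.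

Lemma is_plane_axis a c : is_plane (fun p => coord_of a p = c).
Proof.
  exists (axis_point a 1 0 0), c. split.
  - destruct a; simpl; intro H; injection H; intros; lra.
  - intro x; destruct a, x; unfold dot; simpl; split; intro; lra.
Qed.

Lemma plane_through_axis_points a c u v u' v' (Pl : pset) : is_plane Pl ->
  Pl (axis_point a c u v) -> Pl (axis_point a c u' v) -> Pl (axis_point a c u v') ->
  u <> u' -> v <> v' -> forall x, Pl x <-> coord_of a x = c.
Proof.
  intros [n [d [nz H]]] h1 h2 h3 hu hv x.
  rewrite H in h1, h2, h3. rewrite H.
  destruct n as [n1 n2 n3]. destruct a; unfold dot in *; simpl in *.
  - assert (n2 = 0) by (apply (Rmult_eq_reg_r (u - u')); [ring_simplify|]; lra).
    assert (n3 = 0) by (apply (Rmult_eq_reg_r (v - v')); [ring_simplify|]; lra).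
    subst. assert (n1 <> 0) by (intro; subst; apply nz; reflexivity).
    split; intro e; [apply (Rmult_eq_reg_l n1); lra|rewrite e; lra].
  - assert (n1 = 0) by (apply (Rmult_eq_reg_r (u - u')); [ring_simplify|]; lra).
    assert (n3 = 0) by (apply (Rmult_eq_reg_r (v - v')); [ring_simplify|]; lra).
    subst. assert (n2 <> 0) by (intro; subst; apply nz; reflexivity).
    split; intro e; [apply (Rmult_eq_reg_l n2); lra|rewrite e; lra].
  - assert (n1 = 0) by (apply (Rmult_eq_reg_r (u - u')); [ring_simplify|]; lra).
    assert (n2 = 0) by (apply (Rmult_eq_reg_r (v - v')); [ring_simplify|]; lra).
    subst. assert (n3 <> 0) by (intro; subst; apply nz; reflexivity).
    split; intro e; [apply (Rmult_eq_reg_l n3); lra|rewrite e; lra].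
Qed.

Lemma norm_le_sum_axes a x :
  vnorm x <= Rabs (coord_of a x) + Rabs (coord_of (axis_u a) x) + Rabs (coord_of (axis_v a) x).
Proof. pose proof (norm_le_sum_coords x). destruct a; simpl; lra. Qed.

Lemma dist_le_sum_axes a x y : dist x y <=
  Rabs (coord_of a x - coord_of a y) + Rabs (coord_of (axis_u a) x - coord_of (axis_u a) y)
  + Rabs (coord_of (axis_v a) x - coord_of (axis_v a) y).
Proof. pose proof (dist_le_sum_coords x y). destruct a; simpl; lra. Qed.

Lemma convex_comb_between (lo hi a b s : R) :
  lo <= a <= hi -> lo <= b <= hi -> 0 <= s <= 1 -> lo <= a + s * (b - a) <= hi.
Proof. intros. split; nra. Qed.

(** * Axis-parallel rectangles and L-shapes *)

Lemma not_open_box (a b c d U V : R) :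
  ~ (a < U /\ U < b /\ c < V /\ V < d) -> U <= a \/ b <= U \/ V <= c \/ d <= V.
Proof.
  intro H. destruct (Rle_lt_dec U a); auto. destruct (Rle_lt_dec b U); auto.
  destruct (Rle_lt_dec V c); auto. destruct (Rle_lt_dec d V); auto.
  exfalso; apply H; auto.
Qed.

Ltac split_negations := repeat match goal with
  | H : ~ (_ \/ _) |- _ => apply Decidable.not_or in H; destruct H
  | H : ~ False |- _ => clear H
  | H : ~ (_ < _ /\ _ < _ /\ _ < _ /\ _ < _) |- _ => apply not_open_box in H
  end.

Ltac split_hyps := repeat match goal with
  | H : _ \/ _ |- _ => destruct H
  | H : False |- _ => destruct H
  | H : _ /\ _ |- _ => destruct H
  end.

Ltac seg_bounds a H :=
  match type of H with on_seg ?p ?q ?x =>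
    first [ pose proof (on_seg_coord_le a p q x H ltac:(axis_simpl; lra))
          | pose proof (on_seg_coord_ge a p q x H ltac:(axis_simpl; lra)) ];
    first [ pose proof (on_seg_coord_le (axis_u a) p q x H ltac:(axis_simpl; lra))
          | pose proof (on_seg_coord_ge (axis_u a) p q x H ltac:(axis_simpl; lra)) ];
    first [ pose proof (on_seg_coord_le (axis_v a) p q x H ltac:(axis_simpl; lra))
          | pose proof (on_seg_coord_ge (axis_v a) p q x H ltac:(axis_simpl; lra)) ]
  end.

Ltac on_edge a :=
  first [ apply (on_seg_along_u a); axis_simpl;
            [lra|lra|lra|lra|lra|first [left; split; lra|right; split; lra]]
        | apply (on_seg_along_v a); axis_simpl;
            [lra|lra|lra|lra|lra|first [left; split; lra|right; split; lra]] ].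

Ltac on_some_edge a n :=
  let rec go k := first [ exists k; split; [simpl; lia|unfold vtx, nxt; simpl; on_edge a]
                        | lazymatch k with
                          | S ?k' => go k'
                          end ] in
  go n.

Ltac common_vertex a :=
  first [ exfalso; axis_simpl; lra
        | left; split; [reflexivity|apply (vec_ext_axes a); axis_simpl; lra]
        | right; split; [reflexivity|apply (vec_ext_axes a); axis_simpl; lra] ].

(* The chain of an [n]-gon with explicit axis-parallel vertices [V] lies in its region. *)
Tactic Notation "chain_in_region" constr(a) int_or_var(n) constr(V) tactic3(in_region) :=
  intros [i [hi hs]]; unfold V, vtx, nxt in *; simpl in hi;
  do n (destruct i as [|i]; [simpl in hs; seg_bounds a hs; axis_simpl; split; [lra|in_region]|]);
  lia.

Tactic Notation "simple_axis_polygon" constr(a) constr(c) int_or_var(n) constr(V) :=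
  unfold simple_polygon, V; split; [simpl; lia|]; split;
  [ exists (fun p => coord_of a p = c); split; [apply is_plane_axis|];
    intros v hvv; simpl in hvv; split_hyps; subst; axis_simpl; auto
  | split;
    [ intros i hi; simpl in hi; unfold vtx, nxt; destruct a;
      do n (destruct i as [|i]; [simpl; let E := fresh "E" in intro E; injection E; intros; nra|]); lia
    | intros i j hi hj hij x h1 h2; simpl in hi, hj; unfold vtx, nxt in *;
      do n (destruct i as [|i];
        [do n (destruct j as [|j]; [simpl in h1, h2 |- *; seg_bounds a h1; seg_bounds a h2;
                                    first [lia|common_vertex a]|]); lia|]); lia ] ].

Section Rectangle.
Variables (a : coord) (c u0 u1 v0 v1 : R).
Hypotheses (hu : u0 < u1) (hv : v0 < v1).

Definition rect_vertices :=
  [axis_point a c u0 v0; axis_point a c u1 v0; axis_point a c u1 v1; axis_point a c u0 v1].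

Definition rect_region x :=
  (u0 <= coord_of (axis_u a) x /\ coord_of (axis_u a) x <= u1 /\
   v0 <= coord_of (axis_v a) x /\ coord_of (axis_v a) x <= v1) \/ False.
Definition rect_open x :=
  (u0 < coord_of (axis_u a) x /\ coord_of (axis_u a) x < u1 /\
   v0 < coord_of (axis_v a) x /\ coord_of (axis_v a) x < v1) \/ False.

Lemma rect_chain x : chain rect_vertices x -> coord_of a x = c /\ rect_region x.
Proof. unfold rect_region. chain_in_region a 4 rect_vertices (left; lra). Qed.

Lemma rect_fill x : coord_of a x = c -> rect_region x -> ~ chain rect_vertices x -> rect_open x.
Proof.
  unfold rect_region, rect_open, rect_vertices, chain. intros hN hR nch.
  apply NNPP. intro nI. apply nch. clear nch. split_negations. split_hyps; on_some_edge a 3%nat.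
Qed.

Lemma rect_simple : simple_polygon rect_vertices.
Proof. simple_axis_polygon a c 4 rect_vertices. Qed.

End Rectangle.

(* L-shapes: a [u0,u2] x [v0,v2] rectangle with the corner [u1,u2] x [v1,v2] removed
   ([lshape1]), resp. [u0,u1] x [v0,v1] removed ([lshape2]). *)
Section LShape1.
Variables (a : coord) (c u0 u1 u2 v0 v1 v2 : R).
Hypotheses (hu : u0 < u1) (hu' : u1 < u2) (hv : v0 < v1) (hv' : v1 < v2).

Definition lshape1_vertices :=
  [axis_point a c u0 v0; axis_point a c u2 v0; axis_point a c u2 v1;
   axis_point a c u1 v1; axis_point a c u1 v2; axis_point a c u0 v2].

Definition lshape1_region x :=
  (u0 <= coord_of (axis_u a) x /\ coord_of (axis_u a) x <= u2 /\
   v0 <= coord_of (axis_v a) x /\ coord_of (axis_v a) x <= v1) \/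
  ((u0 <= coord_of (axis_u a) x /\ coord_of (axis_u a) x <= u1 /\
    v0 <= coord_of (axis_v a) x /\ coord_of (axis_v a) x <= v2) \/ False).
Definition lshape1_open x :=
  (u0 < coord_of (axis_u a) x /\ coord_of (axis_u a) x < u2 /\
   v0 < coord_of (axis_v a) x /\ coord_of (axis_v a) x < v1) \/
  ((u0 < coord_of (axis_u a) x /\ coord_of (axis_u a) x < u1 /\
    v0 < coord_of (axis_v a) x /\ coord_of (axis_v a) x < v2) \/ False).

Lemma lshape1_chain x : chain lshape1_vertices x -> coord_of a x = c /\ lshape1_region x.
Proof.
  unfold lshape1_region. chain_in_region a 6 lshape1_vertices (first [left; lra|right; left; lra]).
Qed.

Lemma lshape1_fill x :
  coord_of a x = c -> lshape1_region x -> ~ chain lshape1_vertices x -> lshape1_open x.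
Proof.
  unfold lshape1_region, lshape1_open, lshape1_vertices, chain. intros hN hR nch.
  apply NNPP. intro nI. apply nch. clear nch. split_negations. split_hyps; on_some_edge a 5%nat.
Qed.

Lemma lshape1_simple : simple_polygon lshape1_vertices.
Proof. simple_axis_polygon a c 6 lshape1_vertices. Qed.

End LShape1.

Section LShape2.
Variables (a : coord) (c u0 u1 u2 v0 v1 v2 : R).
Hypotheses (hu : u0 < u1) (hu' : u1 < u2) (hv : v0 < v1) (hv' : v1 < v2).

Definition lshape2_vertices :=
  [axis_point a c u2 v2; axis_point a c u0 v2; axis_point a c u0 v1;
   axis_point a c u1 v1; axis_point a c u1 v0; axis_point a c u2 v0].

Definition lshape2_region x :=
  (u1 <= coord_of (axis_u a) x /\ coord_of (axis_u a) x <= u2 /\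
   v0 <= coord_of (axis_v a) x /\ coord_of (axis_v a) x <= v2) \/
  ((u0 <= coord_of (axis_u a) x /\ coord_of (axis_u a) x <= u2 /\
    v1 <= coord_of (axis_v a) x /\ coord_of (axis_v a) x <= v2) \/ False).
Definition lshape2_open x :=
  (u1 < coord_of (axis_u a) x /\ coord_of (axis_u a) x < u2 /\
   v0 < coord_of (axis_v a) x /\ coord_of (axis_v a) x < v2) \/
  ((u0 < coord_of (axis_u a) x /\ coord_of (axis_u a) x < u2 /\
    v1 < coord_of (axis_v a) x /\ coord_of (axis_v a) x < v2) \/ False).

Lemma lshape2_chain x : chain lshape2_vertices x -> coord_of a x = c /\ lshape2_region x.
Proof.
  unfold lshape2_region. chain_in_region a 6 lshape2_vertices (first [left; lra|right; left; lra]).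
Qed.

Lemma lshape2_fill x :
  coord_of a x = c -> lshape2_region x -> ~ chain lshape2_vertices x -> lshape2_open x.
Proof.
  unfold lshape2_region, lshape2_open, lshape2_vertices, chain. intros hN hR nch.
  apply NNPP. intro nI. apply nch. clear nch. split_negations. split_hyps; on_some_edge a 5%nat.
Qed.

Lemma lshape2_simple : simple_polygon lshape2_vertices.
Proof. simple_axis_polygon a c 6 lshape2_vertices. Qed.

End LShape2.

(* In plane coordinates (u, v): a rectangle [u0,u1] x [v0,v1], or an L-shape. *)
Inductive shape :=
  | SRect (u0 u1 v0 v1 : Z)
  | SL1 (u0 u1 u2 v0 v1 v2 : Z)
  | SL2 (u0 u1 u2 v0 v1 v2 : Z).

(* A face in the plane [coord_of f_axis p = f_level]; [f_outward_pos] tells whether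
   the outward normal points towards increasing [f_axis]. *)
Record aface := mkF { f_axis : coord; f_level : Z; f_shape : shape; f_outward_pos : bool }.

Definition shape_vertices (s : shape) : list (Z * Z) :=
  match s with
  | SRect u0 u1 v0 v1 => [(u0,v0);(u1,v0);(u1,v1);(u0,v1)]
  | SL1 u0 u1 u2 v0 v1 v2 => [(u0,v0);(u2,v0);(u2,v1);(u1,v1);(u1,v2);(u0,v2)]
  | SL2 u0 u1 u2 v0 v1 v2 => [(u2,v2);(u0,v2);(u0,v1);(u1,v1);(u1,v0);(u2,v0)]
  end.

Definition shape_boxes (s : shape) : list (Z * Z * Z * Z) :=
  match s with
  | SRect u0 u1 v0 v1 => [(u0,u1,v0,v1)]
  | SL1 u0 u1 u2 v0 v1 v2 => [(u0,u2,v0,v1);(u0,u1,v0,v2)]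
  | SL2 u0 u1 u2 v0 v1 v2 => [(u1,u2,v0,v2);(u0,u2,v1,v2)]
  end.

Definition wf_shape (s : shape) : bool :=
  match s with
  | SRect u0 u1 v0 v1 => (u0 <? u1)%Z && (v0 <? v1)%Z
  | SL1 u0 u1 u2 v0 v1 v2 | SL2 u0 u1 u2 v0 v1 v2 =>
      (u0 <? u1)%Z && (u1 <? u2)%Z && (v0 <? v1)%Z && (v1 <? v2)%Z
  end.

Definition wf_face (f : aface) := wf_shape (f_shape f).

Lemma shape_boxes_wf s : wf_shape s = true -> forall q, In q (shape_boxes s) ->
  let '(u0, u1, v0, v1) := q in (u0 < u1)%Z /\ (v0 < v1)%Z.
Proof.
  destruct s; simpl; intro W; rewrite !andb_true_iff, !Z.ltb_lt in W; intros q Hq;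
    repeat destruct Hq as [<-|Hq]; try destruct Hq; lia.
Qed.

Lemma shape_boxes_nonempty s : exists q, In q (shape_boxes s).
Proof. destruct s; simpl; eauto. Qed.

Notation pt3 := (Z * Z * Z)%type.

Definition axis_pointZ (a : coord) (c u v : Z) : pt3 :=
  match a with CX => (c, u, v) | CY => (u, c, v) | CZ => (u, v, c) end.
Definition vec_of_Z (p : pt3) : vec3 := let '(x, y, z) := p in mkv (IZR x) (IZR y) (IZR z).

Definition face_verticesZ (f : aface) : list pt3 :=
  map (fun uv => axis_pointZ (f_axis f) (f_level f) (fst uv) (snd uv)) (shape_vertices (f_shape f)).
Definition face_vertices (f : aface) : list vec3 := map vec_of_Z (face_verticesZ f).

Definition box_form (a : coord) (q : Z * Z * Z * Z) : form :=
  let '(u0, u1, v0, v1) := q in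
  FAnd (FGe (axis_u a) u0) (FAnd (FLe (axis_u a) u1) (FAnd (FGe (axis_v a) v0) (FLe (axis_v a) v1))).
Definition open_box_form (a : coord) (q : Z * Z * Z * Z) : form :=
  let '(u0, u1, v0, v1) := q in
  FAnd (FGt (axis_u a) u0) (FAnd (FLt (axis_u a) u1) (FAnd (FGt (axis_v a) v0) (FLt (axis_v a) v1))).

Definition region_form (f : aface) : form := FOrs (map (box_form (f_axis f)) (shape_boxes (f_shape f))).
Definition open_region_form (f : aface) : form :=
  FOrs (map (open_box_form (f_axis f)) (shape_boxes (f_shape f))).
Definition face_form (f : aface) : form := FAnd (FEq (f_axis f) (f_level f)) (region_form f).
Definition relint_form (f : aface) : form := FAnd (FEq (f_axis f) (f_level f)) (open_region_form f).

(* An open neighbourhood of the relative interior, one unit thick. *)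
Definition slab_form (f : aface) : form :=
  FOrs (map (fun q => FAnd (FGt (f_axis f) (f_level f - 1))
                           (FAnd (FLt (f_axis f) (f_level f + 1)) (open_box_form (f_axis f) q)))
            (shape_boxes (f_shape f))).

Definition face_plane (f : aface) : pset := fun x => coord_of (f_axis f) x = IZR (f_level f).
Definition face_point (f : aface) (u v : R) : vec3 := axis_point (f_axis f) (IZR (f_level f)) u v.

Definition face_set (f : aface) : pset := holds (face_form f).
Definition face_relint (f : aface) : pset := holds (relint_form f).
Definition face_slab (f : aface) : pset := holds (slab_form f).

Lemma region_form_closed f : is_closed (holds (region_form f)).
Proof.
  apply closed_form_closed. unfold region_form. destruct f as [a c s g]; simpl.
  induction (shape_boxes s) as [|[[[u0 u1] v0] v1] l IH]; simpl; auto.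
Qed.

Lemma open_region_form_open f : is_open (holds (open_region_form f)).
Proof.
  apply open_form_open. unfold open_region_form. destruct f as [a c s g]; simpl.
  induction (shape_boxes s) as [|[[[u0 u1] v0] v1] l IH]; simpl; auto.
Qed.

Lemma face_set_closed f : is_closed (face_set f).
Proof.
  apply (is_closed_and (fun p => coord_of (f_axis f) p = IZR (f_level f))).
  - apply (closed_form_closed (FEq (f_axis f) (f_level f))); reflexivity.
  - apply region_form_closed.
Qed.

Lemma face_slab_open f : is_open (face_slab f).
Proof.
  apply open_form_open. unfold slab_form. destruct f as [a c s g]; simpl.
  induction (shape_boxes s) as [|[[[u0 u1] v0] v1] l IH]; simpl; auto.
Qed.

Lemma open_region_in_region f x : holds (open_region_form f) x -> holds (region_form f) x.
Proof.
  unfold open_region_form, region_form. destruct f as [a c s g]; simpl.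
  induction (shape_boxes s) as [|[[[u0 u1] v0] v1] l IH]; simpl; auto.
  intros [H|H]; [left; lra|right; auto].
Qed.

Lemma face_relint_in_face_set f x : face_relint f x -> face_set f x.
Proof. intros [h H]. split; auto. apply open_region_in_region; auto. Qed.

Lemma face_relint_in_slab f x : face_relint f x -> face_slab f x.
Proof.
  unfold face_relint, face_slab, relint_form, slab_form, open_region_form.
  destruct f as [a c s g]; simpl. intros [hN H].
  induction (shape_boxes s) as [|[[[u0 u1] v0] v1] l IH]; simpl in *; auto.
  destruct H as [H|H]; [left|right; auto]. rewrite minus_IZR, plus_IZR. lra.
Qed.

Lemma face_set_plane f x : face_set f x -> face_plane f x.
Proof. intros [h _]. exact h. Qed.

Lemma open_region_bounded f :
  exists B, forall x, face_plane f x -> holds (open_region_form f) x -> vnorm x <= B.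
Proof.
  unfold open_region_form, face_plane. destruct f as [a c s g]; simpl.
  induction (shape_boxes s) as [|[[[u0 u1] v0] v1] l [B HB]]; simpl; [exists 0; intros x _ []|].
  exists (Rmax B (Rabs (IZR c) + (Rabs (IZR u0) + Rabs (IZR u1)) + (Rabs (IZR v0) + Rabs (IZR v1)))).
  intros x hx [H|H]; [|eapply Rle_trans; [|apply Rmax_l]; auto].
  eapply Rle_trans; [|apply Rmax_r]. eapply Rle_trans; [apply (norm_le_sum_axes a)|]. rewrite hx.
  assert (Rabs (coord_of (axis_u a) x) <= Rabs (IZR u0) + Rabs (IZR u1))
    by (unfold Rabs; repeat destruct Rcase_abs; lra).
  assert (Rabs (coord_of (axis_v a) x) <= Rabs (IZR v0) + Rabs (IZR v1))
    by (unfold Rabs; repeat destruct Rcase_abs; lra).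
  lra.
Qed.

Lemma region_star f c0 :
  (forall q, In q (shape_boxes (f_shape f)) -> holds (box_form (f_axis f) q) c0) -> forall y, holds (region_form f) y -> forall s, 0 <= s <= 1 ->
  holds (region_form f) (vadd c0 (vscale s (vsub y c0))).
Proof.
  unfold region_form. destruct f as [a c sh g]; simpl.
  induction (shape_boxes sh) as [|q l IH]; simpl; intros Hc y Hy s hs; auto.
  destruct Hy as [Hy|Hy]; [left|right; apply IH; auto].
  assert (Hq := Hc q (or_introl eq_refl)). destruct q as [[[u0 u1] v0] v1]. simpl in *.
  rewrite !coord_of_vadd, !coord_of_vscale, !coord_of_vsub.
  pose proof (convex_comb_between (IZR u0) (IZR u1) (coord_of (axis_u a) c0) (coord_of (axis_u a) y) s
                ltac:(lra) ltac:(lra) hs).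
  pose proof (convex_comb_between (IZR v0) (IZR v1) (coord_of (axis_v a) c0) (coord_of (axis_v a) y) s
                ltac:(lra) ltac:(lra) hs).
  lra.
Qed.

Lemma face_vertices_polygon_set f c0 u v u' v' x :
  In (face_point f u v) (face_vertices f) -> In (face_point f u' v) (face_vertices f) ->
  In (face_point f u v') (face_vertices f) -> u <> u' -> v <> v' ->
  (forall p, In p (face_vertices f) -> face_plane f p) ->
  (forall x, chain (face_vertices f) x -> face_plane f x /\ holds (region_form f) x) ->
  (forall x, face_plane f x -> holds (region_form f) x -> ~ chain (face_vertices f) x ->
     holds (open_region_form f) x) ->
  face_plane f c0 -> (forall q, In q (shape_boxes (f_shape f)) -> holds (box_form (f_axis f) q) c0) ->
  polygon_set (face_vertices f) x <-> face_set f x.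
Proof.
  intros H1 H2 H3 hu hv Hver Hch Hfill Hc0 Hbox.
  apply (polygon_set_char _ (face_plane f) (holds (region_form f)) (holds (open_region_form f)) c0).
  - intros Pl HPl HV y. apply (plane_through_axis_points _ _ u v u' v' Pl); auto.
  - apply is_plane_axis.
  - exact Hver.
  - intros y z t hy hz. unfold face_plane in *.
    rewrite coord_of_vadd, coord_of_vscale, coord_of_vsub, hy, hz. ring.
  - exact Hch.
  - apply region_form_closed.
  - apply open_region_form_open.
  - apply open_region_in_region.
  - apply open_region_bounded.
  - exact Hfill.
  - split; auto. destruct (shape_boxes_nonempty (f_shape f)) as [q hq].
    apply (holds_FOrs_map (box_form (f_axis f))). exists q; auto.
  - intros y _ Hy s hs. apply region_star; auto.
Qed.

Lemma face_vertices_rect a c u0 u1 v0 v1 g :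
  face_vertices (mkF a c (SRect u0 u1 v0 v1) g) =
  rect_vertices a (IZR c) (IZR u0) (IZR u1) (IZR v0) (IZR v1).
Proof. destruct a; reflexivity. Qed.
Lemma face_vertices_lshape1 a c u0 u1 u2 v0 v1 v2 g :
  face_vertices (mkF a c (SL1 u0 u1 u2 v0 v1 v2) g) =
  lshape1_vertices a (IZR c) (IZR u0) (IZR u1) (IZR u2) (IZR v0) (IZR v1) (IZR v2).
Proof. destruct a; reflexivity. Qed.
Lemma face_vertices_lshape2 a c u0 u1 u2 v0 v1 v2 g :
  face_vertices (mkF a c (SL2 u0 u1 u2 v0 v1 v2) g) =
  lshape2_vertices a (IZR c) (IZR u0) (IZR u1) (IZR u2) (IZR v0) (IZR v1) (IZR v2).
Proof. destruct a; reflexivity. Qed.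

(* [V] is the explicit vertex list; [(u, v)], [(u', v)], [(u, v')] are three of its
   vertices spanning the plane, and the vertex [c0] lies in every rectangle of the shape. *)
Ltac face_polygon_case c0 u v u' v' V chain_lemma fill_lemma :=
  let x := fresh "x" in
  intro x; apply (face_vertices_polygon_set _ c0 u v u' v' x); unfold face_point, face_plane;
  cbn [f_axis f_level f_shape] in *;
  rewrite ?face_vertices_rect, ?face_vertices_lshape1, ?face_vertices_lshape2; unfold V;
  [ simpl; tauto | simpl; tauto | simpl; tauto | lra | lra
  | intros p hp; simpl in hp; split_hyps; subst; axis_simpl; reflexivity
  | intros y hy; eapply chain_lemma; [lra..|exact hy]
  | intros y h1 h2 h3; eapply fill_lemma; [lra..|exact h1|exact h2|exact h3]
  | axis_simpl; reflexivity
  | intros q hq; simpl in hq; split_hyps; subst; simpl; axis_simpl; lra ].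

Theorem face_polygon f : wf_face f = true ->
  simple_polygon (face_vertices f) /\ forall x, polygon_set (face_vertices f) x <-> face_set f x.
Proof.
  destruct f as [a c [u0 u1 v0 v1|u0 u1 u2 v0 v1 v2|u0 u1 u2 v0 v1 v2] g]; unfold wf_face; simpl;
    rewrite ?andb_true_iff, ?Z.ltb_lt; intro W; split_hyps; z_to_R.
  - split; [rewrite face_vertices_rect; apply rect_simple; lra|].
    face_polygon_case (axis_point a (IZR c) (IZR u0) (IZR v0)) (IZR u0) (IZR v0) (IZR u1) (IZR v1)
      rect_vertices rect_chain rect_fill.
  - split; [rewrite face_vertices_lshape1; apply lshape1_simple; lra|].
    face_polygon_case (axis_point a (IZR c) (IZR u0) (IZR v0)) (IZR u0) (IZR v0) (IZR u2) (IZR v2)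
      lshape1_vertices lshape1_chain lshape1_fill.
  - split; [rewrite face_vertices_lshape2; apply lshape2_simple; lra|].
    face_polygon_case (axis_point a (IZR c) (IZR u2) (IZR v2)) (IZR u2) (IZR v2) (IZR u0) (IZR v0)
      lshape2_vertices lshape2_chain lshape2_fill.
Qed.

(** * Combinatorial checks on integer vertex lists *)

Definition pt3_eqb (p q : pt3) : bool :=
  let '(x, y, z) := p in let '(x', y', z') := q in (x =? x')%Z && (y =? y')%Z && (z =? z')%Z.

Lemma pt3_eqb_eq p q : pt3_eqb p q = true <-> p = q.
Proof.
  destruct p as [[x y] z], q as [[x' y'] z']; simpl. rewrite !andb_true_iff, !Z.eqb_eq.
  split; [intros [[-> ->] ->]; auto|intro H; injection H; auto].
Qed.

Lemma pt3_eqb_refl p : pt3_eqb p p = true.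
Proof. apply pt3_eqb_eq; auto. Qed.

Lemma vec_of_Z_inj p q : vec_of_Z p = vec_of_Z q -> p = q.
Proof.
  destruct p as [[x y] z], q as [[x' y'] z']; simpl. intro H; injection H; intros.
  apply eq_IZR in H0, H1, H2. subst; auto.
Qed.

Definition pt3_inb (p : pt3) (l : list pt3) : bool := existsb (pt3_eqb p) l.

Lemma pt3_inb_In p l : pt3_inb p l = true <-> In p l.
Proof.
  unfold pt3_inb. rewrite existsb_exists. split.
  - intros [q [h e]]. apply pt3_eqb_eq in e. subst; auto.
  - intro h; exists p; split; auto; apply pt3_eqb_refl.
Qed.

Lemma In_map_vec_of_Z p l : In (vec_of_Z p) (map vec_of_Z l) <-> In p l.
Proof.
  rewrite in_map_iff. split; [intros [q [e h]]; apply vec_of_Z_inj in e; subst; auto|].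
  intro h; exists p; auto.
Qed.

Definition nxtZ (W : list pt3) (i : nat) := Nat.modulo (S i) (length W).

Definition edgesZ (W : list pt3) : list (pt3 * pt3) :=
  map (fun i => (nth i W (0,0,0)%Z, nth (nxtZ W i) W (0,0,0)%Z)) (seq 0 (length W)).

Definition is_edgeZ (W : list pt3) (p q : pt3) : bool :=
  existsb (fun e => (pt3_eqb (fst e) p && pt3_eqb (snd e) q) || (pt3_eqb (fst e) q && pt3_eqb (snd e) p))
    (edgesZ W).

Lemma vtx_map_vec_of_Z W i : vtx (map vec_of_Z W) i = vec_of_Z (nth i W (0,0,0)%Z).
Proof. apply (map_nth vec_of_Z W (0,0,0)%Z). Qed.

Lemma nxt_map_vec_of_Z W i : nxt (map vec_of_Z W) i = nxtZ W i.
Proof. unfold nxt, nxtZ. rewrite length_map. reflexivity. Qed.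

Lemma In_edgesZ W e : In e (edgesZ W) ->
  exists i, (i < length W)%nat /\ e = (nth i W (0,0,0)%Z, nth (nxtZ W i) W (0,0,0)%Z).
Proof.
  unfold edgesZ. rewrite in_map_iff. intros [i [<- h]]. apply in_seq in h. exists i; split; auto; lia.
Qed.

Lemma is_edgeZ_of_In_edgesZ W e : In e (edgesZ W) -> is_edgeZ W (fst e) (snd e) = true.
Proof. intro h. apply existsb_exists. exists e. split; auto. rewrite !pt3_eqb_refl. auto. Qed.

Lemma is_edgeZ_sym W p q : is_edgeZ W p q = is_edgeZ W q p.
Proof.
  unfold is_edgeZ. induction (edgesZ W) as [|e l IH]; simpl; auto.
  rewrite IH. f_equal. apply orb_comm.
Qed.

Lemma is_edge_map_vec_of_Z W a b : is_edge (map vec_of_Z W) a b ->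
  exists p q, a = vec_of_Z p /\ b = vec_of_Z q /\ is_edgeZ W p q = true.
Proof.
  intros [i [hi H]]. rewrite length_map in hi. rewrite !vtx_map_vec_of_Z, nxt_map_vec_of_Z in H.
  assert (Hin : In (nth i W (0,0,0)%Z, nth (nxtZ W i) W (0,0,0)%Z) (edgesZ W))
    by (apply in_map_iff; exists i; split; auto; apply in_seq; lia).
  apply is_edgeZ_of_In_edgesZ in Hin. simpl in Hin.
  destruct H as [[<- <-]|[<- <-]]; do 2 eexists; (split; [reflexivity|split; [reflexivity|]]);
    [|rewrite is_edgeZ_sym]; exact Hin.
Qed.

Lemma is_edge_of_is_edgeZ W p q :
  is_edgeZ W p q = true -> is_edge (map vec_of_Z W) (vec_of_Z p) (vec_of_Z q).
Proof.
  unfold is_edgeZ. rewrite existsb_exists. intros [e [He H]].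
  destruct (In_edgesZ W e He) as [i [hi ->]].
  exists i. rewrite length_map. split; auto. rewrite !vtx_map_vec_of_Z, nxt_map_vec_of_Z. simpl in H.
  rewrite orb_true_iff, !andb_true_iff, !pt3_eqb_eq in H. destruct H as [[-> ->]|[-> ->]]; auto.
Qed.

Lemma nth_map_map_vec_of_Z (WZ : list (list pt3)) i :
  nth i (map (map vec_of_Z) WZ) [] = map vec_of_Z (nth i WZ []).
Proof. apply (map_nth (map vec_of_Z) WZ [] i). Qed.

Definition edge_check (WZ : list (list pt3)) : bool :=
  let n := length WZ in
  forallb (fun i => forallb (fun e =>
     Nat.eqb (length (filter (fun k => negb (Nat.eqb k i) && is_edgeZ (nth k WZ []) (fst e) (snd e))
                             (seq 0 n))) 1)
     (edgesZ (nth i WZ []))) (seq 0 n).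

Theorem edge_sound WZ : edge_check WZ = true ->
  let Fs := map (map vec_of_Z) WZ in
  forall i, (i < length Fs)%nat -> forall a b, is_edge (nth i Fs []) a b ->
  exists j, (j < length Fs)%nat /\ j <> i /\ is_edge (nth j Fs []) a b /\
    forall k, (k < length Fs)%nat -> k <> i -> is_edge (nth k Fs []) a b -> k = j.
Proof.
  intros Hc Fs i hi a b He. unfold Fs in *. rewrite length_map in *. rewrite nth_map_map_vec_of_Z in He.
  destruct (is_edge_map_vec_of_Z _ _ _ He) as [p [q [-> [-> Hpq]]]].
  apply existsb_exists in Hpq as [e [Hin He2]].
  assert (Hsym : forall W, is_edgeZ W (fst e) (snd e) = is_edgeZ W p q).
  { intro W. rewrite orb_true_iff, !andb_true_iff, !pt3_eqb_eq in He2.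
    destruct He2 as [[-> ->]|[-> ->]]; auto. apply is_edgeZ_sym. }
  unfold edge_check in Hc. rewrite forallb_forall in Hc.
  specialize (Hc i (proj2 (in_seq _ _ _) (conj (Nat.le_0_l _) hi))).
  rewrite forallb_forall in Hc. specialize (Hc e Hin). apply Nat.eqb_eq in Hc.
  set (F := filter _ _) in Hc.
  assert (HF : forall k, In k F <-> (k < length WZ)%nat /\ k <> i /\ is_edgeZ (nth k WZ []) p q = true).
  { intro k. unfold F. rewrite filter_In, in_seq, andb_true_iff, negb_true_iff, Nat.eqb_neq, Hsym.
    split; intros [h1 [h2 h3]]; split; try lia; auto. }
  destruct F as [|j [|j' F']] eqn:EF; simpl in Hc; try discriminate.
  destruct (proj1 (HF j) (or_introl eq_refl)) as [hj [hji Hj]].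
  exists j. repeat split; auto; [rewrite nth_map_map_vec_of_Z; apply is_edge_of_is_edgeZ; auto|].
  intros k hk hki Hk. rewrite nth_map_map_vec_of_Z in Hk.
  destruct (is_edge_map_vec_of_Z _ _ _ Hk) as [p' [q' [e1 [e2 Hk']]]].
  apply vec_of_Z_inj in e1, e2. subst p' q'.
  assert (Hkj : In k [j]) by (apply HF; auto). destruct Hkj as [->|[]]; auto.
Qed.

Definition memb (i : nat) (l : list nat) : bool := existsb (Nat.eqb i) l.

Lemma memb_In i l : memb i l = true <-> In i l.
Proof.
  unfold memb. rewrite existsb_exists. split.
  - intros [x [h e]]. apply Nat.eqb_eq in e; subst; auto.
  - intro h; exists i; split; auto; apply Nat.eqb_refl.
Qed.

Fixpoint nodupb (l : list nat) : bool :=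
  match l with [] => true | x :: l' => negb (memb x l') && nodupb l' end.

Lemma nodupb_NoDup l : nodupb l = true -> NoDup l.
Proof.
  induction l as [|x l IH]; simpl; intro H; [constructor|].
  apply andb_true_iff in H as [H1 H2]. constructor; auto.
  intro h. apply memb_In in h. rewrite h in H1. discriminate.
Qed.

Definition shareZ (W W' : list pt3) : bool := existsb (fun e => is_edgeZ W' (fst e) (snd e)) (edgesZ W).

Lemma share_edge_of_shareZ W W' : shareZ W W' = true -> share_edge (map vec_of_Z W) (map vec_of_Z W').
Proof.
  unfold shareZ. rewrite existsb_exists. intros [e [He H]].
  exists (vec_of_Z (fst e)), (vec_of_Z (snd e)).
  split; apply is_edge_of_is_edgeZ; auto. apply is_edgeZ_of_In_edgesZ; auto.
Qed.

(* Greedily walk from face to unused face through shared edges; [vertex_check] then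
   verifies that the walk visits every face at the vertex and closes up. *)
Fixpoint walk (WZ : list (list pt3)) (S : list nat) (fuel : nat) (cur : nat) (used : list nat)
  : list nat :=
  match fuel with
  | O => rev used
  | Datatypes.S f =>
      match find (fun k => negb (memb k used) && shareZ (nth cur WZ []) (nth k WZ [])) S with
      | Some k => walk WZ S f k (k :: used)
      | None => rev used
      end
  end.

Definition faces_at (WZ : list (list pt3)) (p : pt3) :=
  filter (fun k => pt3_inb p (nth k WZ [])) (seq 0 (length WZ)).

Definition cycle_at (WZ : list (list pt3)) (p : pt3) : list nat :=
  match faces_at WZ p with [] => [] | f0 :: _ => walk WZ (faces_at WZ p) (length WZ) f0 [f0] end.

Definition vertex_cycle_check (WZ : list (list pt3)) (p : pt3) : bool :=
  let L := cycle_at WZ p in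
  nodupb L && forallb (fun k => Nat.ltb k (length WZ)) L &&
  forallb (fun i => Bool.eqb (memb i L) (pt3_inb p (nth i WZ []))) (seq 0 (length WZ)) &&
  forallb (fun k => shareZ (nth (nth k L O) WZ [])
                           (nth (nth (Nat.modulo (Datatypes.S k) (length L)) L O) WZ []))
    (seq 0 (length L)).

Definition vertex_check (WZ : list (list pt3)) : bool := forallb (vertex_cycle_check WZ) (concat WZ).

Theorem vertex_sound WZ : vertex_check WZ = true ->
  let Fs := map (map vec_of_Z) WZ in
  forall v, (exists V, In V Fs /\ In v V) ->
    exists L : list nat, NoDup L /\
      (forall i, In i L <-> (i < length Fs)%nat /\ In v (nth i Fs [])) /\
      forall k, (k < length L)%nat ->
        share_edge (nth (nth k L O) Fs []) (nth (nth (Nat.modulo (Datatypes.S k) (length L)) L O) Fs []).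
Proof.
  intros Hc Fs v [V [HV Hv]]. unfold Fs in *.
  apply in_map_iff in HV as [W [<- HW]]. apply in_map_iff in Hv as [p [<- Hp]].
  unfold vertex_check in Hc. rewrite forallb_forall in Hc.
  specialize (Hc p (proj2 (in_concat _ _) (ex_intro _ W (conj HW Hp)))).
  unfold vertex_cycle_check in Hc. set (L := cycle_at WZ p) in Hc.
  rewrite !andb_true_iff, !forallb_forall in Hc. destruct Hc as [[[H1 H2] H3] H4].
  assert (Hmem : forall i, (i < length WZ)%nat -> memb i L = pt3_inb p (nth i WZ []))
    by (intros i hi; apply eqb_prop, H3, in_seq; lia).
  exists L. split; [apply nodupb_NoDup; auto|split].
  - intro i. rewrite length_map, nth_map_map_vec_of_Z, In_map_vec_of_Z, <- pt3_inb_In, <- memb_In.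
    split.
    + intro hi. assert (hlt := H2 i (proj1 (memb_In i L) hi)). apply Nat.ltb_lt in hlt.
      split; auto. rewrite <- Hmem; auto.
    + intros [hi hin]. rewrite Hmem; auto.
  - intros k hk. rewrite !nth_map_map_vec_of_Z. apply share_edge_of_shareZ, H4, in_seq. lia.
Qed.

Definition between_form (i : coord) (a b : Z) : form := FAnd (FGe i (Z.min a b)) (FLe i (Z.max a b)).

Definition seg_form (e : pt3 * pt3) : form :=
  let '((x, y, z), (x', y', z')) := e in
  FAnd (between_form CX x x') (FAnd (between_form CY y y') (between_form CZ z z')).

Definition point_form (p : pt3) : form :=
  let '(x, y, z) := p in FAnd (FEq CX x) (FAnd (FEq CY y) (FEq CZ z)).

Definition axis_aligned (e : pt3 * pt3) : bool :=
  let '((x, y, z), (x', y', z')) := e in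
  (Z.eqb y y' && Z.eqb z z' && negb (Z.eqb x x')) || (Z.eqb x x' && Z.eqb z z' && negb (Z.eqb y y')) ||
  (Z.eqb x x' && Z.eqb y y' && negb (Z.eqb z z')).

Definition common_edges (W W' : list pt3) :=
  filter (fun e => axis_aligned e && is_edgeZ W' (fst e) (snd e)) (edgesZ W).
Definition common_vertices (W W' : list pt3) := filter (fun p => pt3_inb p W') W.

Definition meet_form (fi fj : aface) : form :=
  FImp (FAnd (face_form fi) (face_form fj))
       (FOr (FOrs (map seg_form (common_edges (face_verticesZ fi) (face_verticesZ fj))))
            (FOrs (map point_form (common_vertices (face_verticesZ fi) (face_verticesZ fj))))).

Definition default_face := mkF CX 0 (SRect 0 1 0 1) true.

Definition meet_check (fs : list aface) : bool :=
  forallb (fun i => forallb (fun j =>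
    Nat.eqb i j || valid (meet_form (nth i fs default_face) (nth j fs default_face)))
    (seq 0 (length fs))) (seq 0 (length fs)).

Lemma between_form_spec i a b x : holds (between_form i a b) x ->
  IZR a <= coord_of i x <= IZR b \/ IZR b <= coord_of i x <= IZR a.
Proof.
  simpl. destruct (Z.le_ge_cases a b) as [h|h].
  - rewrite Z.min_l, Z.max_r by lia. left; auto.
  - rewrite Z.min_r, Z.max_l by lia. right; auto.
Qed.

Lemma seg_form_on_seg e x : axis_aligned e = true -> holds (seg_form e) x ->
  on_seg (vec_of_Z (fst e)) (vec_of_Z (snd e)) x.
Proof.
  destruct e as [[[x1 y1] z1] [[x2 y2] z2]]. cbn [seg_form axis_aligned fst snd vec_of_Z].
  intros Ha [Hx [Hy Hz]]. apply between_form_spec in Hx, Hy, Hz. simpl in Hx, Hy, Hz.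
  rewrite !orb_true_iff, !andb_true_iff, !negb_true_iff, !Z.eqb_eq in Ha.
  rewrite !Z.eqb_neq in Ha.
  destruct Ha as [[[[-> ->] e3]|[[-> ->] e3]]|[[-> ->] e3]];
    assert (IZR _ <> IZR _) by (intro E; apply e3, eq_IZR, E).
  - apply (on_seg_along_u CY); simpl; lra.
  - apply (on_seg_along_u CX); simpl; lra.
  - apply (on_seg_along_v CX); simpl; lra.
Qed.

Lemma point_form_eq p x : holds (point_form p) x -> x = vec_of_Z p.
Proof. destruct p as [[a b] c], x. simpl. intros [-> [-> ->]]. reflexivity. Qed.

Lemma nth_map_face_vertices fs i : (i < length fs)%nat ->
  nth i (map face_vertices fs) [] = face_vertices (nth i fs default_face).
Proof.
  intro h. rewrite (nth_indep _ [] (face_vertices default_face)) by (rewrite length_map; auto).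
  apply map_nth.
Qed.

Theorem meet_sound fs : forallb wf_face fs = true -> meet_check fs = true ->
  let Fs := map face_vertices fs in
  forall i j, (i < length Fs)%nat -> (j < length Fs)%nat -> i <> j ->
  forall x, polygon_set (nth i Fs []) x -> polygon_set (nth j Fs []) x ->
  (exists a b, is_edge (nth i Fs []) a b /\ is_edge (nth j Fs []) a b /\ on_seg a b x) \/
  (In x (nth i Fs []) /\ In x (nth j Fs [])).
Proof.
  intros Hwf Hc Fs i j hi hj hij x Hi Hj. unfold Fs in *. rewrite length_map in hi, hj.
  rewrite (nth_map_face_vertices fs i hi), (nth_map_face_vertices fs j hj) in *.
  set (fi := nth i fs default_face) in *. set (fj := nth j fs default_face) in *.
  rewrite forallb_forall in Hwf.
  apply (proj2 (face_polygon fi (Hwf fi (nth_In _ _ hi)))) in Hi.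
  apply (proj2 (face_polygon fj (Hwf fj (nth_In _ _ hj)))) in Hj.
  unfold meet_check in Hc. rewrite forallb_forall in Hc.
  specialize (Hc i (proj2 (in_seq _ _ _) (conj (Nat.le_0_l _) hi))). rewrite forallb_forall in Hc.
  specialize (Hc j (proj2 (in_seq _ _ _) (conj (Nat.le_0_l _) hj))).
  apply orb_true_iff in Hc as [Hc|Hc]; [apply Nat.eqb_eq in Hc; contradiction|].
  destruct (valid_sound _ Hc x) as [H|[H|H]]; [exfalso; apply H; split; auto| |].
  - left. apply holds_FOrs_map in H as [e [He Hs]].
    apply filter_In in He as [He Hb]. apply andb_true_iff in Hb as [Ha Hej].
    exists (vec_of_Z (fst e)), (vec_of_Z (snd e)). split; [|split].
    + apply is_edge_of_is_edgeZ, is_edgeZ_of_In_edgesZ; auto.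
    + apply is_edge_of_is_edgeZ; auto.
    + apply seg_form_on_seg; auto.
  - right. apply holds_FOrs_map in H as [p [Hp Hs]]. apply point_form_eq in Hs. subst x.
    apply filter_In in Hp as [Hp Hb]. apply pt3_inb_In in Hb.
    split; apply In_map_vec_of_Z; auto.
Qed.

(** * Flat points and maximal faces *)

Definition unit_vec (i : coord) : vec3 :=
  match i with CX => mkv 1 0 0 | CY => mkv 0 1 0 | CZ => mkv 0 0 1 end.

Definition movable (S : pset) (x : vec3) (i : coord) :=
  forall d, 0 < d -> exists s, s <> 0 /\ Rabs s < d /\ S (vadd x (vscale s (unit_vec i))).

Lemma coord_of_shift_same i x s : coord_of i (vadd x (vscale s (unit_vec i))) = coord_of i x + s.
Proof. destruct i; simpl; ring. Qed.

Lemma coord_of_shift_other i j x s :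
  i <> j -> coord_of j (vadd x (vscale s (unit_vec i))) = coord_of j x.
Proof. destruct i, j; simpl; intro h; try (exfalso; apply h; reflexivity); ring. Qed.

Lemma movable_mono (A B : pset) x i : (forall y, A y -> B y) -> movable A x i -> movable B x i.
Proof. intros H M d hd. destruct (M d hd) as [s [h1 [h2 h3]]]. exists s; auto. Qed.

(* A plane containing shifts of [x] along all three axes has a zero normal. *)
Lemma flat_pt_not_movable (S : pset) x : flat_pt S x -> ~ (forall i, movable (boundary S) x i).
Proof.
  intros [bx [r [Pl [hr [[n [d [nz HPl]]] H]]]]] Hm.
  assert (Hx : dot n x = d) by (apply HPl, H; auto; rewrite dist_refl; auto).
  assert (Hi : forall i, coord_of i n = 0).
  { intro i. destruct (Hm i r hr) as [s [s0 [hs Hb]]].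
    assert (Hd : dist x (vadd x (vscale s (unit_vec i))) < r).
    { eapply Rle_lt_trans; [apply dist_le_sum_coords|]. destruct i; simpl;
      repeat match goal with
             | |- context [Rabs (?u - (?u + ?k))] => replace (u - (u + k)) with (- k) by ring
             end;
      rewrite ?Rabs_Ropp, ?Rmult_0_r, ?Rmult_1_r, ?Rabs_R0; lra. }
    assert (E := proj1 (HPl _) (H _ Hb Hd)).
    assert (dot n (vadd x (vscale s (unit_vec i))) = dot n x + s * coord_of i n)
      by (destruct i, n; unfold dot; simpl; ring).
    assert (Hs : s * coord_of i n = 0) by lra.
    apply Rmult_integral in Hs as [Hs|Hs]; [contradiction|auto]. }
  apply nz. pose proof (Hi CX); pose proof (Hi CY); pose proof (Hi CZ).
  destruct n; simpl in *; subst; reflexivity.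
Qed.

Lemma small_step_within (lo hi xv d : R) : lo < hi -> lo <= xv <= hi -> 0 < d ->
  exists s, s <> 0 /\ Rabs s < d /\ lo <= xv + s <= hi.
Proof.
  intros h1 h2 h3.
  pose proof (Rmin_l (d/2) ((hi - lo)/2)); pose proof (Rmin_r (d/2) ((hi - lo)/2)).
  assert (0 < Rmin (d/2) ((hi - lo)/2)) by (apply Rmin_glb_lt; lra).
  set (m := Rmin (d/2) ((hi - lo)/2)) in *.
  destruct (Rle_lt_dec xv ((lo + hi)/2)); [exists m|exists (- m)];
    rewrite ?Rabs_Ropp, Rabs_pos_eq; repeat split; lra.
Qed.

Lemma face_set_movable f x i :
  wf_face f = true -> face_set f x -> i <> f_axis f -> movable (face_set f) x i.
Proof.
  destruct f as [a c s g]. unfold wf_face, face_set, face_form, region_form; simpl.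
  intros W [hN H] hi. destruct (axes_distinct a) as [n1 [n2 n3]].
  assert (Hb := shape_boxes_wf s W).
  induction (shape_boxes s) as [|q l IH]; simpl in *; [destruct H|].
  destruct H as [H|H]; [|intros d hd; destruct (IH H (fun q h => Hb q (or_intror h)) d hd)
                           as [t [t0 [ht [h1 h2]]]]; exists t; repeat split; auto].
  specialize (Hb q (or_introl eq_refl)). destruct q as [[[u0 u1] v0] v1]. simpl in H.
  destruct Hb as [b1 b2]. apply IZR_lt in b1, b2. intros d hd.
  destruct (axis_other i a hi) as [->| ->].
  - destruct (small_step_within (IZR u0) (IZR u1) (coord_of (axis_u a) x) d) as [t [t0 [ht Ht]]];
      try lra.
    exists t. repeat split; auto; rewrite ?coord_of_shift_other by auto; auto.
    left. simpl. rewrite coord_of_shift_same, coord_of_shift_other by auto. lra.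
  - destruct (small_step_within (IZR v0) (IZR v1) (coord_of (axis_v a) x) d) as [t [t0 [ht Ht]]];
      try lra.
    exists t. repeat split; auto; rewrite ?coord_of_shift_other by auto; auto.
    left. simpl. rewrite coord_of_shift_same, coord_of_shift_other by auto. lra.
Qed.

Section FaceList.

Variables (S : pset) (fs : list aface).
Hypothesis wf_fs : forall f, In f fs -> wf_face f = true.
Hypothesis boundary_fs : forall x, boundary S x <-> exists f, In f fs /\ face_set f x.
Hypothesis slabs_fs :
  forall f g, In f fs -> In g fs -> f <> g -> forall x, face_slab f x -> ~ face_set g x.

Theorem flat_pt_char
  (crease : forall f, In f fs -> forall x, face_set f x -> ~ face_relint f x ->
     exists g, In g fs /\ f_axis g <> f_axis f /\ face_set g x) :
  forall x, flat_pt S x <-> exists f, In f fs /\ face_relint f x.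
Proof.
  intro x. split.
  - intros [bx Hr]. destruct (proj1 (boundary_fs x) bx) as [f [hf Rf]].
    destruct (classic (face_relint f x)) as [R|nR]; [exists f; auto|exfalso].
    destruct (crease f hf x Rf nR) as [g [hg [hax Rg]]].
    apply (flat_pt_not_movable S x (conj bx Hr)). intro i.
    destruct (classic (i = f_axis f)) as [->|hi];
      [apply (movable_mono (face_set g))|apply (movable_mono (face_set f))];
      try (intros y hy; apply boundary_fs; eauto); apply face_set_movable; auto.
  - intros [f [hf Rf]].
    assert (bx : boundary S x)
      by (apply boundary_fs; exists f; split; auto; apply face_relint_in_face_set; auto).
    split; auto. destruct (face_slab_open f x (face_relint_in_slab f x Rf)) as [r [hr Hr]].
    exists r, (fun p => coord_of (f_axis f) p = IZR (f_level f)).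
    split; auto. split; [apply is_plane_axis|].
    intros y By dy. destruct (proj1 (boundary_fs y) By) as [g [hg Rg]].
    destruct (classic (f = g)) as [<-|ne]; [apply face_set_plane; auto|].
    exfalso. apply (slabs_fs f g hf hg ne y); auto.
Qed.

Hypothesis flat_fs : forall x, flat_pt S x <-> exists f, In f fs /\ face_relint f x.

Lemma flat_component_in_face f : In f fs -> forall K, connected K -> (forall z, K z -> flat_pt S z) ->
  forall x0, K x0 -> face_relint f x0 -> forall y, K y -> face_relint f y.
Proof.
  intros hf K HK Kf x0 K0 R0 y Ky.
  set (others := fun p => exists g, (In g fs /\ g <> f) /\ face_slab g p).
  assert (Hrelint : forall z, K z -> exists m, In m fs /\ face_relint m z)
    by (intros z Kz; apply flat_fs, Kf; auto).
  assert (Uy : face_slab f y).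
  { apply (connected_stays_in K (face_slab f) others HK (face_slab_open f)
             (is_open_exists _ face_slab face_slab_open)) with x0; auto.
    - intros z Kz. destruct (Hrelint z Kz) as [m [hm Rm]].
      destruct (classic (m = f)) as [->|ne]; [left|right; exists m; split; auto];
        apply face_relint_in_slab; auto.
    - intros z Kz Uz [g [[hg ng] Ug]]. destruct (Hrelint z Kz) as [m [hm Rm]].
      apply face_relint_in_face_set in Rm.
      destruct (classic (m = f)) as [->|ne];
        [exact (slabs_fs g f hg hf ng z Ug Rm)|exact (slabs_fs f m hf hm (not_eq_sym ne) z Uz Rm)].
    - apply face_relint_in_slab; auto. }
  destruct (Hrelint y Ky) as [m [hm Rm]].
  destruct (classic (m = f)) as [->|ne]; auto.
  exfalso. apply (slabs_fs f m hf hm (not_eq_sym ne) y Uy). apply face_relint_in_face_set; auto.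
Qed.

Lemma convex_comb_strict (lo hi p m s : R) :
  lo <= p <= hi -> lo < m < hi -> 0 < s <= 1 -> lo < p + s * (m - p) < hi.
Proof.
  intros. assert (0 <= (1-s)*(p-lo)) by (apply Rmult_le_pos; lra).
  assert (0 < s*(m-lo)) by (apply Rmult_lt_0_compat; lra).
  assert (0 <= (1-s)*(hi-p)) by (apply Rmult_le_pos; lra).
  assert (0 < s*(hi-m)) by (apply Rmult_lt_0_compat; lra). split; nra.
Qed.

Lemma convex_comb_between_strict (lo hi a b t : R) :
  lo < a < hi -> lo < b < hi -> 0 <= t <= 1 -> lo < a + t * (b - a) < hi.
Proof.
  intros. assert (0 <= (1-t)*(a-lo)) by (apply Rmult_le_pos; lra).
  assert (0 <= t*(b-lo)) by (apply Rmult_le_pos; lra).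
  assert (0 <= (1-t)*(hi-a)) by (apply Rmult_le_pos; lra).
  assert (0 <= t*(hi-b)) by (apply Rmult_le_pos; lra). split; nra.
Qed.

(* Move [x] a small fraction of the way towards the centre of the rectangle. *)
Lemma rectangle_interior_approx a c u0 u1 v0 v1 x : u0 < u1 -> v0 < v1 -> coord_of a x = c ->
  u0 <= coord_of (axis_u a) x <= u1 -> v0 <= coord_of (axis_v a) x <= v1 ->
  forall r, 0 < r -> exists y, (coord_of a y = c /\
    u0 < coord_of (axis_u a) y < u1 /\ v0 < coord_of (axis_v a) y < v1) /\ dist x y < r.
Proof.
  intros hu hv hN hU hV r hr.
  set (L := u1 - u0 + (v1 - v0)). assert (hL : 0 < L) by (unfold L; lra).
  pose proof (Rmin_l (1/2) (r / (2 * L))); pose proof (Rmin_r (1/2) (r / (2 * L))).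
  assert (0 < Rmin (1/2) (r / (2 * L))) by (apply Rmin_glb_lt; [lra|apply Rdiv_lt_0_compat; lra]).
  set (s := Rmin (1/2) (r / (2 * L))) in *.
  set (xu := coord_of (axis_u a) x) in *. set (xv := coord_of (axis_v a) x) in *.
  set (mu := (u0 + u1) / 2). set (mv := (v0 + v1) / 2).
  exists (axis_point a c (xu + s * (mu - xu)) (xv + s * (mv - xv))). axis_simpl. split.
  - pose proof (convex_comb_strict u0 u1 xu mu s hU ltac:(unfold mu; lra) ltac:(lra)).
    pose proof (convex_comb_strict v0 v1 xv mv s hV ltac:(unfold mv; lra) ltac:(lra)). lra.
  - eapply Rle_lt_trans; [apply (dist_le_sum_axes a)|]. axis_simpl. fold xu xv.
    replace (coord_of a x - c) with 0 by lra. rewrite Rabs_R0.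
    replace (xu - (xu + s * (mu - xu))) with (s * (xu - mu)) by ring.
    replace (xv - (xv + s * (mv - xv))) with (s * (xv - mv)) by ring.
    rewrite !Rabs_mult, (Rabs_pos_eq s) by lra.
    assert (Rabs (xu - mu) <= u1 - u0) by (unfold mu, Rabs; destruct Rcase_abs; lra).
    assert (Rabs (xv - mv) <= v1 - v0) by (unfold mv, Rabs; destruct Rcase_abs; lra).
    assert (s * Rabs (xu - mu) <= s * (u1 - u0)) by (apply Rmult_le_compat_l; lra).
    assert (s * Rabs (xv - mv) <= s * (v1 - v0)) by (apply Rmult_le_compat_l; lra).
    assert (s * L <= r / 2).
    { apply (Rmult_le_reg_r (/ L)); [apply Rinv_0_lt_compat; lra|].
      replace (s * L * / L) with s by (field; lra).
      replace (r / 2 * / L) with (r / (2 * L)) by (field; lra). lra. }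
    unfold L in *. lra.
Qed.

Lemma closure_face_relint f : wf_face f = true -> forall x, closure (face_relint f) x <-> face_set f x.
Proof.
  intros W x. split.
  - intro H. apply face_set_closed. eapply closure_mono; [|exact H]. apply face_relint_in_face_set.
  - destruct f as [a c s g]. unfold wf_face in W. simpl in W. assert (Hb := shape_boxes_wf s W).
    unfold face_relint, face_set, relint_form, face_form, region_form, open_region_form; simpl.
    intros [hN H] r hr.
    induction (shape_boxes s) as [|q l IH]; simpl in *; [destruct H|].
    destruct H as [H|H]; [|destruct (IH (fun q h => Hb q (or_intror h)) H) as [y [[h1 h2] D]];
                           exists y; split; auto].
    specialize (Hb q (or_introl eq_refl)). destruct q as [[[u0 u1] v0] v1]. simpl in *.
    destruct Hb as [b1 b2]. apply IZR_lt in b1, b2.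
    destruct (rectangle_interior_approx a (IZR c) (IZR u0) (IZR u1) (IZR v0) (IZR v1) x b1 b2 hN
                ltac:(lra) ltac:(lra) r hr) as [y [Hy D]].
    exists y. split; auto. split; [tauto|]. left. lra.
Qed.

Lemma open_rectangle_convex a c u0 u1 v0 v1 :
  convex (fun p => coord_of a p = c /\ (u0 < coord_of (axis_u a) p /\ coord_of (axis_u a) p < u1 /\
                                        v0 < coord_of (axis_v a) p /\ coord_of (axis_v a) p < v1)).
Proof.
  intros y z [hy Hy] [hz Hz] t ht. rewrite !coord_of_vadd, !coord_of_vscale, !coord_of_vsub.
  split; [rewrite hy, hz; ring|].
  pose proof (convex_comb_between_strict u0 u1 (coord_of (axis_u a) y) (coord_of (axis_u a) z) t
                ltac:(lra) ltac:(lra) ht).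
  pose proof (convex_comb_between_strict v0 v1 (coord_of (axis_v a) y) (coord_of (axis_v a) z) t
                ltac:(lra) ltac:(lra) ht).
  lra.
Qed.

(* The two rectangles of an L-shape overlap, so its relative interior is connected. *)
Lemma face_relint_connected f : wf_face f = true -> connected (face_relint f).
Proof.
  destruct f as [a c s g]. unfold wf_face, face_relint, relint_form, open_region_form; simpl.
  destruct s; simpl; rewrite ?andb_true_iff, ?Z.ltb_lt; intro W; split_hyps; z_to_R.
  - eapply connected_ext;
      [|apply convex_connected, (open_rectangle_convex a (IZR c) (IZR u0) (IZR u1) (IZR v0) (IZR v1))].
    intro x; simpl; tauto.
  - eapply connected_ext; [|apply connected_union;
      [apply convex_connected, (open_rectangle_convex a (IZR c) (IZR u0) (IZR u2) (IZR v0) (IZR v1))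
      |apply convex_connected, (open_rectangle_convex a (IZR c) (IZR u0) (IZR u1) (IZR v0) (IZR v2))|]].
    + intro x; simpl; tauto.
    + exists (axis_point a (IZR c) ((IZR u0 + IZR u1)/2) ((IZR v0 + IZR v1)/2)). axis_simpl.
      split; split; auto; lra.
  - eapply connected_ext; [|apply connected_union;
      [apply convex_connected, (open_rectangle_convex a (IZR c) (IZR u1) (IZR u2) (IZR v0) (IZR v2))
      |apply convex_connected, (open_rectangle_convex a (IZR c) (IZR u0) (IZR u2) (IZR v1) (IZR v2))|]].
    + intro x; simpl; tauto.
    + exists (axis_point a (IZR c) ((IZR u1 + IZR u2)/2) ((IZR v1 + IZR v2)/2)). axis_simpl.
      split; split; auto; lra.
Qed.

Lemma face_relint_nonempty f : wf_face f = true -> exists x, face_relint f x.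
Proof.
  destruct f as [a c s g]. unfold wf_face, face_relint, relint_form, open_region_form; simpl.
  destruct s; simpl; rewrite ?andb_true_iff, ?Z.ltb_lt; intro W; split_hyps; z_to_R;
    [ exists (axis_point a (IZR c) ((IZR u0 + IZR u1)/2) ((IZR v0 + IZR v1)/2))
    | exists (axis_point a (IZR c) ((IZR u0 + IZR u1)/2) ((IZR v0 + IZR v1)/2))
    | exists (axis_point a (IZR c) ((IZR u1 + IZR u2)/2) ((IZR v1 + IZR v2)/2)) ];
    axis_simpl; split; auto; left; lra.
Qed.

(* A maximal face is the closure of a component of the flat points; these components are
   exactly the relative interiors of the listed faces. *)
Theorem faces_char :
  (forall F, face S F -> exists f, In f fs /\ forall x, F x <-> face_set f x) /\
  (forall f, In f fs -> face S (face_set f)).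
Proof.
  assert (Hcomp : forall f, In f fs -> forall x0, face_relint f x0 -> forall y,
            (exists K, connected K /\ (forall z, K z -> flat_pt S z) /\ K x0 /\ K y) <->
            face_relint f y).
  { intros f hf x0 R0 y. split.
    - intros [K [HK [Kf [K0 Ky]]]]. exact (flat_component_in_face f hf K HK Kf x0 K0 R0 y Ky).
    - intro Ry. exists (face_relint f). split; [apply face_relint_connected; auto|].
      split; auto. intros z Rz. apply flat_fs. exists f; auto. }
  split.
  - intros F [C [[x0 [F0 HC]] HF]]. destruct (proj1 (flat_fs x0) F0) as [f [hf R0]].
    exists f. split; auto. intro x. rewrite HF, <- (closure_face_relint f (wf_fs f hf)).
    apply closure_ext. intro y. rewrite HC. apply Hcomp; auto.
  - intros f hf. exists (face_relint f). split.
    + destruct (face_relint_nonempty f (wf_fs f hf)) as [x0 R0].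
      exists x0. split; [apply flat_fs; exists f; auto|].
      intro y. symmetry. apply Hcomp; auto.
    + intro x. symmetry. apply closure_face_relint; auto.
Qed.

End FaceList.

(** * Outward normals *)

Definition sign (b : bool) : R := if b then 1 else -1.

Definition face_normal (f : aface) : vec3 := vscale (sign (f_outward_pos f)) (unit_vec (f_axis f)).

Lemma face_normal_norm f : vnorm (face_normal f) = 1.
Proof.
  unfold face_normal, vnorm, dot, sign. destruct (f_outward_pos f), (f_axis f); simpl;
    match goal with |- sqrt ?e = 1 => replace e with 1 by ring end; apply sqrt_1.
Qed.

Definition set_cell (i : coord) (c : cell) (c3 : cell3) : cell3 :=
  match i with
  | CX => (c, snd (fst c3), snd c3)
  | CY => (fst (fst c3), c, snd c3)
  | CZ => (fst (fst c3), snd (fst c3), c)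
  end.

(* The unit slabs on either side of the face plane: points at distance [t] in (0, 1)
   from the face, along the normal, lie in these grid cells. *)
Definition cell_outside (f : aface) := if f_outward_pos f then Iv (f_level f) else Iv (f_level f - 1).
Definition cell_inside (f : aface) := if f_outward_pos f then Iv (f_level f - 1) else Iv (f_level f).

Definition normal_check (sF : form) (f : aface) : bool :=
  form_on_grid sF && form_on_grid (relint_form f) &&
  forallb (fun c3 => negb (holds_cell (relint_form f) c3) ||
     (negb (holds_cell sF (set_cell (f_axis f) (cell_outside f) c3)) &&
      holds_cell sF (set_cell (f_axis f) (cell_inside f) c3))) grid_cells3.

Lemma in_cell3_set_cell c3 x y a cl : in_cell3 c3 x -> in_cell cl (coord_of a y) ->
  (forall j, j <> a -> coord_of j y = coord_of j x) -> in_cell3 (set_cell a cl c3) y.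
Proof.
  intros [h1 [h2 h3]] hc hj. unfold in_cell3.
  destruct a; simpl in *;
    [pose proof (hj CY) as e1; pose proof (hj CZ) as e2
    |pose proof (hj CX) as e1; pose proof (hj CZ) as e2
    |pose proof (hj CX) as e1; pose proof (hj CY) as e2];
    simpl in *; rewrite e1, e2 by discriminate; auto.
Qed.

Lemma shift_face_normal x t f : vadd x (vscale t (face_normal f)) =
  vadd x (vscale (t * sign (f_outward_pos f)) (unit_vec (f_axis f))).
Proof. unfold face_normal. destruct (f_axis f), x; unfold vadd, vscale; simpl; f_equal; ring. Qed.

Lemma unshift_face_normal x t f : vsub x (vscale t (face_normal f)) =
  vadd x (vscale (- (t * sign (f_outward_pos f))) (unit_vec (f_axis f))).
Proof. unfold face_normal. destruct (f_axis f), x; unfold vadd, vsub, vscale; simpl; f_equal; ring. Qed.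

Lemma normal_sound sF f : normal_check sF f = true -> forall x, face_relint f x -> forall t, 0 < t < 1 ->
  ~ holds sF (vadd x (vscale t (face_normal f))) /\ holds sF (vsub x (vscale t (face_normal f))).
Proof.
  intros Hc x Rx t ht. unfold normal_check in Hc. rewrite !andb_true_iff, forallb_forall in Hc.
  destruct Hc as [[ok1 ok2] Hall].
  destruct (grid_cells3_cover x) as [c3 [Hin Hs]]. specialize (Hall c3 Hin).
  rewrite (proj2 (holds_cell_spec _ _ x ok2 Hs) Rx) in Hall. simpl in Hall.
  rewrite andb_true_iff, negb_true_iff in Hall. destruct Hall as [Hout Hin3].
  assert (hN : coord_of (f_axis f) x = IZR (f_level f)) by (destruct Rx; auto).
  assert (Hshift : forall s cl, in_cell cl (coord_of (f_axis f) x + s) ->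
            in_cell3 (set_cell (f_axis f) cl c3) (vadd x (vscale s (unit_vec (f_axis f)))))
    by (intros s cl hcl; apply (in_cell3_set_cell c3 x); auto;
        [rewrite coord_of_shift_same; auto|intros j hj; apply coord_of_shift_other; auto]).
  rewrite shift_face_normal, unshift_face_normal. split.
  - rewrite <- (holds_cell_spec sF (set_cell (f_axis f) (cell_outside f) c3) _ ok1), Hout;
      [discriminate|]. apply Hshift.
    rewrite hN. unfold cell_outside, sign; destruct (f_outward_pos f); simpl;
      repeat rewrite ?minus_IZR, ?plus_IZR; lra.
  - rewrite <- (holds_cell_spec sF (set_cell (f_axis f) (cell_inside f) c3) _ ok1); auto.
    apply Hshift.
    rewrite hN. unfold cell_inside, sign; destruct (f_outward_pos f); simpl;
      repeat rewrite ?minus_IZR, ?plus_IZR; lra.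
Qed.

Theorem face_normal_outward (sF : form) (fs : list aface) f : In f fs ->
  (forall x, flat_pt (holds sF) x <-> exists f, In f fs /\ face_relint f x) ->
  (forall f g, In f fs -> In g fs -> f <> g -> forall x, face_slab f x -> ~ face_set g x) ->
  normal_check sF f = true -> outward_normal (holds sF) (face_set f) (face_normal f).
Proof.
  intros hf Hflat Hslab Hnc. split; [apply face_normal_norm|split].
  - exists (fun p => coord_of (f_axis f) p = IZR (f_level f)).
    split; [split; [apply is_plane_axis|apply face_set_plane]|].
    intros y z hy hz. unfold face_normal, sign, dot.
    destruct (f_outward_pos f), (f_axis f); simpl in *; rewrite hy, hz; ring.
  - intros x Fx Flx. exists 1. split; [lra|]. intros t ht.
    destruct (proj1 (Hflat x) Flx) as [g [hg Rg]].
    destruct (classic (g = f)) as [->|ne]; [apply normal_sound; auto|].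
    exfalso. apply (Hslab g f hg hf ne x); auto. apply face_relint_in_slab; auto.
Qed.

(** * Polyhedra certified by box formulas *)

Definition coord_eq_dec (a b : coord) : {a = b} + {a <> b}.
Proof. decide equality. Defined.

Definition aface_eq_dec (f g : aface) : {f = g} + {f <> g}.
Proof.
  decide equality;
    first [apply bool_dec|apply coord_eq_dec|apply Z.eq_dec|decide equality; apply Z.eq_dec].
Defined.

Definition boundary_check (sF iF : form) (fs : list aface) : bool :=
  valid (FIff (FAnd sF (FNot iF)) (FOrs (map face_form fs))).

Definition slab_check (fs : list aface) : bool :=
  forallb (fun f => forallb (fun g =>
    if aface_eq_dec f g then true else valid (FNot (FAnd (slab_form f) (face_form g)))) fs) fs.

Definition crease_check (fs : list aface) : bool :=
  forallb (fun f => valid (FImp (FAnd (face_form f) (FNot (relint_form f)))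
     (FOrs (map face_form
        (filter (fun g => if coord_eq_dec (f_axis g) (f_axis f) then false else true) fs)))))
    fs.

(* [sF] describes the solid, [iF] its interior and [fs] its faces. *)
Definition polyhedron_check (sF iF : form) (fs : list aface) : bool :=
  closed_form sF && open_form iF && valid (FImp iF sF) &&
  forallb wf_face fs && edge_check (map face_verticesZ fs) && vertex_check (map face_verticesZ fs) &&
  meet_check fs && boundary_check sF iF fs && slab_check fs && crease_check fs &&
  forallb (normal_check sF) fs.

Lemma boundary_check_sound sF iF fs :
  is_closed (holds sF) -> (forall x, interior (holds sF) x <-> holds iF x) ->
  boundary_check sF iF fs = true ->
  forall x, boundary (holds sF) x <-> exists f, In f fs /\ face_set f x.
Proof.
  intros Hcl Hint Hc x. unfold boundary. rewrite Hint. unfold face_set.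
  rewrite <- (holds_FOrs_map face_form).
  assert (H := valid_sound _ Hc x). simpl in H. split.
  - intros [c ni]. assert (holds sF x) by (apply Hcl; auto). tauto.
  - intro R. split; [apply closure_subset|]; tauto.
Qed.

Lemma slab_check_sound fs : slab_check fs = true ->
  forall f g, In f fs -> In g fs -> f <> g -> forall x, face_slab f x -> ~ face_set g x.
Proof.
  intros Hc f g hf hg ne x U R. unfold slab_check in Hc. rewrite forallb_forall in Hc.
  specialize (Hc f hf). rewrite forallb_forall in Hc. specialize (Hc g hg).
  destruct (aface_eq_dec f g); [contradiction|]. apply (valid_sound _ Hc x). split; auto.
Qed.

Lemma crease_check_sound fs : crease_check fs = true ->
  forall f, In f fs -> forall x, face_set f x -> ~ face_relint f x ->
  exists g, In g fs /\ f_axis g <> f_axis f /\ face_set g x.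
Proof.
  intros Hc f hf x R nR. unfold crease_check in Hc. rewrite forallb_forall in Hc.
  destruct (valid_sound _ (Hc f hf) x) as [H|H]; [exfalso; apply H; split; auto|].
  apply holds_FOrs_map in H as [g [hg Rg]]. apply filter_In in hg as [hg e].
  exists g. destruct (coord_eq_dec (f_axis g) (f_axis f)); [discriminate|auto].
Qed.

Lemma map_face_vertices fs : map face_vertices fs = map (map vec_of_Z) (map face_verticesZ fs).
Proof. rewrite map_map. reflexivity. Qed.

Theorem polyhedron_check_sound (sF iF : form) (fs : list aface) :
  polyhedron_check sF iF fs = true ->
  connected (holds sF) -> bounded (holds sF) ->
  (forall x, interior (holds sF) x -> holds iF x) ->
  (forall x, holds sF x -> closure (interior (holds sF)) x) ->
  polyhedron (holds sF) /\
  (forall F, face (holds sF) F -> exists f, In f fs /\ forall x, F x <-> face_set f x) /\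
  (forall f, In f fs ->
     face (holds sF) (face_set f) /\ outward_normal (holds sF) (face_set f) (face_normal f)).
Proof.
  unfold polyhedron_check. rewrite !andb_true_iff.
  intros [[[[[[[[[[Hcl Hop] Hsub] Hwf] Hedge] Hvert] Hmeet] Hbd] Hslab] Hcr] Hnor] Hconn Hbdd Hint Hcli.
  apply closed_form_closed in Hcl. rewrite forallb_forall in Hwf, Hnor.
  assert (Hint' : forall x, interior (holds sF) x <-> holds iF x).
  { intro x. split; [apply Hint|]. apply open_subset_interior; [apply open_form_open; auto|].
    intros y hy. destruct (valid_sound _ Hsub y); tauto. }
  assert (HB := boundary_check_sound sF iF fs Hcl Hint' Hbd).
  assert (Hsl := slab_check_sound fs Hslab).
  assert (Hflat := flat_pt_char (holds sF) fs Hwf HB Hsl (crease_check_sound fs Hcr)).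
  destruct (faces_char (holds sF) fs Hwf Hsl Hflat) as [FC1 FC2].
  split; [|split; [exact FC1|intros f hf; split; [auto|apply (face_normal_outward sF fs); auto]]].
  do 4 (split; auto).
  { intro x. split; auto. intro H. apply Hcl. eapply closure_mono; [|exact H]. apply interior_subset. }
  exists (map face_vertices fs). split; [|split; [|split; [|split]]].
  - intros V HV. apply in_map_iff in HV as [f [<- hf]]. apply face_polygon; auto.
  - intro x. rewrite HB. split.
    + intros [f [hf R]]. exists (face_vertices f). split; [apply in_map; auto|].
      apply face_polygon; auto.
    + intros [V [HV P]]. apply in_map_iff in HV as [f [<- hf]]. exists f. split; auto.
      apply face_polygon; auto.
  - rewrite map_face_vertices. apply edge_sound; auto.
  - apply meet_sound; auto. apply forallb_forall; auto.
  - rewrite map_face_vertices. apply vertex_sound; auto.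
Qed.

(** * Markers determined by face descriptions *)

(* A marker is an integer point together with a face description providing its plane and
   normal; [anchors_face f g p] says that the face [f] of a solid has the plane and normal
   of [g] and contains [p]. *)
Definition pp_marker_of (t : aface * pt3) : pp_marker := (vec_of_Z (snd t), face_plane (fst t)).
Definition pn_marker_of (t : aface * pt3) : pn_marker := (vec_of_Z (snd t), face_normal (fst t)).

Definition anchors_face (f g : aface) (p : pt3) : bool :=
  (if coord_eq_dec (f_axis f) (f_axis g) then true else false) && Z.eqb (f_level f) (f_level g) &&
  Bool.eqb (f_outward_pos f) (f_outward_pos g) && form_on_grid (face_form f) &&
  holds_cell (face_form f) (Pt (fst (fst p)), Pt (snd (fst p)), Pt (snd p)).

Lemma anchors_face_spec f g p : anchors_face f g p = true ->
  face_plane f = face_plane g /\ face_normal f = face_normal g /\ face_set f (vec_of_Z p).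
Proof.
  unfold anchors_face. rewrite !andb_true_iff. intros [[[[h1 h2] h3] h4] h5].
  destruct (coord_eq_dec (f_axis f) (f_axis g)) as [e1|]; [|discriminate].
  apply Z.eqb_eq in h2. apply eqb_prop in h3.
  unfold face_plane, face_normal. rewrite e1, h2, h3. split; [reflexivity|split; [reflexivity|]].
  apply (holds_cell_spec _ (Pt (fst (fst p)), Pt (snd (fst p)), Pt (snd p)) _ h4); auto.
  destruct p as [[a b] c]. repeat split.
Qed.

Lemma face_set_plane_of f : plane_of (face_set f) (face_plane f).
Proof. split; [apply is_plane_axis|intros x Fx; apply face_set_plane; auto]. Qed.

Lemma plane_of_ext (F G Pl : pset) : (forall x, F x <-> G x) -> plane_of G Pl -> plane_of F Pl.
Proof. intros E [hPl hG]. split; auto. intros x Fx. apply hG, E; auto. Qed.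

Lemma outward_normal_ext (S F G : pset) n :
  (forall x, F x <-> G x) -> outward_normal S G n -> outward_normal S F n.
Proof.
  intros E [hn [[Pl [HPl hPl]] hout]]. split; auto. split.
  - exists Pl. split; auto. apply (plane_of_ext F G); auto.
  - intros x Fx. apply hout, E; auto.
Qed.

Section Anchors.

Variables (S : pset) (fs : list aface).
Hypothesis faces_fs : forall F, face S F -> exists f, In f fs /\ forall x, F x <-> face_set f x.
Hypothesis normals_fs :
  forall f, In f fs -> face S (face_set f) /\ outward_normal S (face_set f) (face_normal f).

Lemma anchor_on_face t : existsb (fun f => anchors_face f (fst t) (snd t)) fs = true ->
  exists F, face S F /\ F (vec_of_Z (snd t)) /\
    plane_of F (face_plane (fst t)) /\ outward_normal S F (face_normal (fst t)).
Proof.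
  intro H. apply existsb_exists in H as [f [hf e]].
  destruct (anchors_face_spec _ _ _ e) as [e1 [e2 R]]. destruct (normals_fs f hf).
  exists (face_set f). rewrite <- e1, <- e2.
  split; [|split; [|split]]; auto; apply face_set_plane_of.
Qed.

Lemma face_has_anchor (anchors : list (aface * pt3)) :
  forallb (fun f => existsb (fun t => anchors_face f (fst t) (snd t)) anchors) fs = true ->
  forall F, face S F -> exists t, In t anchors /\ F (vec_of_Z (snd t)) /\
    plane_of F (face_plane (fst t)) /\ outward_normal S F (face_normal (fst t)).
Proof.
  intros Hb F HF. destruct (faces_fs F HF) as [f [hf HFf]].
  rewrite forallb_forall in Hb. destruct (proj1 (existsb_exists _ _) (Hb f hf)) as [t [ht e]].
  destruct (anchors_face_spec _ _ _ e) as [e1 [e2 R]]. destruct (normals_fs f hf) as [_ Hn].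
  exists t. rewrite <- e1, <- e2. split; [auto|split; [apply HFf; auto|split]].
  - apply (plane_of_ext F (face_set f)); auto. apply face_set_plane_of.
  - apply (outward_normal_ext S F (face_set f)); auto.
Qed.

Lemma markups_of_anchors (anchors : list (aface * pt3)) :
  forallb (fun t => existsb (fun f => anchors_face f (fst t) (snd t)) fs) anchors = true ->
  forallb (fun f => existsb (fun t => anchors_face f (fst t) (snd t)) anchors) fs = true ->
  pp_markup S (map pp_marker_of anchors) /\ pn_markup S (map pn_marker_of anchors).
Proof.
  intros Ha Hb. rewrite forallb_forall in Ha.
  assert (Hmark : forall t, In t anchors -> exists F, face S F /\ F (vec_of_Z (snd t)) /\
             plane_of F (face_plane (fst t)) /\ outward_normal S F (face_normal (fst t)))
    by (intros t ht; apply anchor_on_face, Ha; auto).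
  split; (split; [|split]).
  - intros m hm. apply in_map_iff in hm as [t [<- ht]].
    destruct (Hmark t ht) as [F [_ [HF [[hPl hPlF] _]]]]. split; [auto|apply hPlF; auto].
  - intros m hm. apply in_map_iff in hm as [t [<- ht]].
    destruct (Hmark t ht) as [F [? [? [? ?]]]]. exists F; auto.
  - intros F HF. destruct (face_has_anchor anchors Hb F HF) as [t [ht [? [? ?]]]].
    exists (pp_marker_of t). split; [apply in_map|]; auto.
  - intros m hm. apply in_map_iff in hm as [t [<- ht]]. apply face_normal_norm.
  - intros m hm. apply in_map_iff in hm as [t [<- ht]].
    destruct (Hmark t ht) as [F [? [? [? ?]]]]. exists F; auto.
  - intros F HF. destruct (face_has_anchor anchors Hb F HF) as [t [ht [? [? ?]]]].
    exists (pn_marker_of t). split; [apply in_map|]; auto.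
Qed.

End Anchors.

(** * Two solids sharing their markers *)

Lemma interior_probes (S : pset) x : interior S x -> exists d, 0 < d /\
  forall a b c, -1 <= a <= 1 -> -1 <= b <= 1 -> -1 <= c <= 1 ->
  S (mkv (vx x + d * a) (vy x + d * b) (vz x + d * c)).
Proof.
  intros [r [hr H]]. exists (r / 4). split; [lra|]. intros a b c ha hb hc.
  apply Rabs_le in ha, hb, hc. apply H.
  eapply Rle_lt_trans; [apply dist_le_sum_coords|]. simpl.
  replace (vx x - (vx x + r / 4 * a)) with (- (r/4 * a)) by ring.
  replace (vy x - (vy x + r / 4 * b)) with (- (r/4 * b)) by ring.
  replace (vz x - (vz x + r / 4 * c)) with (- (r/4 * c)) by ring.
  rewrite !Rabs_Ropp, !Rabs_mult, (Rabs_pos_eq (r/4)) by lra.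
  assert (r/4 * Rabs a <= r/4) by (rewrite <- (Rmult_1_r (r/4)) at 2; apply Rmult_le_compat_l; lra).
  assert (r/4 * Rabs b <= r/4) by (rewrite <- (Rmult_1_r (r/4)) at 2; apply Rmult_le_compat_l; lra).
  assert (r/4 * Rabs c <= r/4) by (rewrite <- (Rmult_1_r (r/4)) at 2; apply Rmult_le_compat_l; lra).
  lra.
Qed.

Lemma closure_interior_of_segment (S : pset) (c : vec3) x :
  (forall s, 0 < s <= 1 -> interior S (seg_point x c s)) -> closure (interior S) x.
Proof.
  intros HI r hr. destruct (seg_point_close x c r hr) as [d [hd Hd]].
  pose proof (Rmin_l 1 d); pose proof (Rmin_r 1 d).
  assert (0 < Rmin 1 d) by (apply Rmin_glb_lt; lra).
  exists (seg_point x c (Rmin 1 d)). split; [apply HI; lra|].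
  replace x with (seg_point x c 0) at 1
    by (unfold seg_point; destruct x, c; unfold vadd, vscale, vsub; simpl; f_equal; ring).
  apply Hd. rewrite Rabs_minus_sym, Rminus_0_r, Rabs_pos_eq; lra.
Qed.

Lemma box_convex (a1 b1 a2 b2 a3 b3 : R) :
  convex (fun p => a1 <= vx p <= b1 /\ a2 <= vy p <= b2 /\ a3 <= vz p <= b3).
Proof.
  intros y z [h1 [h2 h3]] [k1 [k2 k3]] t ht. simpl. split; [|split]; apply convex_comb_between; auto.
Qed.

Definition cube_form : form :=
  FAnd (FGe CX 0) (FAnd (FLe CX 2) (FAnd (FGe CY 0) (FAnd (FLe CY 2) (FAnd (FGe CZ 0) (FLe CZ 2))))).
Definition open_cube_form : form :=
  FAnd (FGt CX 0) (FAnd (FLt CX 2) (FAnd (FGt CY 0) (FAnd (FLt CY 2) (FAnd (FGt CZ 0) (FLt CZ 2))))).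

Lemma bounded_cube (sF : form) : valid (FImp sF cube_form) = true -> bounded (holds sF).
Proof.
  intro H. exists 6. intros x Sx. destruct (valid_sound _ H x) as [|[h1 [h2 [h3 [h4 [h5 h6]]]]]];
    [contradiction|simpl in *].
  eapply Rle_trans; [apply norm_le_sum_coords|]. rewrite !Rabs_pos_eq by lra. lra.
Qed.

Definition solidP : form := FAnd cube_form (FOr (FLe CX 1) (FOr (FLe CY 1) (FLe CZ 1))).
Definition interiorP : form := FAnd open_cube_form (FOr (FLt CX 1) (FOr (FLt CY 1) (FLt CZ 1))).

Definition solidQ : form := FAnd cube_form (FOr (FLe CZ 1) (FAnd (FLe CX 1) (FLe CY 1))).
Definition interiorQ : form := FAnd open_cube_form (FOr (FLt CZ 1) (FAnd (FLt CX 1) (FLt CY 1))).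

Definition facesP : list aface := [
  mkF CX 0 (SRect 0 2 0 2) false; mkF CY 0 (SRect 0 2 0 2) false; mkF CZ 0 (SRect 0 2 0 2) false;
  mkF CX 2 (SL1 0 1 2 0 1 2) true; mkF CY 2 (SL1 0 1 2 0 1 2) true; mkF CZ 2 (SL1 0 1 2 0 1 2) true;
  mkF CX 1 (SRect 1 2 1 2) true; mkF CY 1 (SRect 1 2 1 2) true; mkF CZ 1 (SRect 1 2 1 2) true ].
Definition facesQ : list aface := [
  mkF CX 0 (SL1 0 1 2 0 1 2) false; mkF CY 0 (SL1 0 1 2 0 1 2) false; mkF CZ 0 (SRect 0 2 0 2) false;
  mkF CX 2 (SRect 0 2 0 1) true; mkF CY 2 (SRect 0 2 0 1) true; mkF CZ 2 (SRect 0 1 0 1) true;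
  mkF CX 1 (SRect 0 1 1 2) true; mkF CY 1 (SRect 0 1 1 2) true; mkF CZ 1 (SL2 0 1 2 0 1 2) true ].

Lemma interiorP_spec x : interior (holds solidP) x -> holds interiorP x.
Proof.
  intro H. destruct (interior_probes _ x H) as [d [hd T]].
  pose proof (T (-1) 0 0) as A1; pose proof (T 1 0 0) as A2; pose proof (T 0 (-1) 0) as A3;
    pose proof (T 0 1 0) as A4; pose proof (T 0 0 (-1)) as A5; pose proof (T 0 0 1) as A6;
    pose proof (T 1 1 1) as A7; simpl in *.
  specialize (A1 ltac:(lra) ltac:(lra) ltac:(lra)). specialize (A2 ltac:(lra) ltac:(lra) ltac:(lra)).
  specialize (A3 ltac:(lra) ltac:(lra) ltac:(lra)). specialize (A4 ltac:(lra) ltac:(lra) ltac:(lra)).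
  specialize (A5 ltac:(lra) ltac:(lra) ltac:(lra)). specialize (A6 ltac:(lra) ltac:(lra) ltac:(lra)).
  specialize (A7 ltac:(lra) ltac:(lra) ltac:(lra)).
  destruct A7 as [_ A7]. split; [lra|].
  destruct A7 as [A7|[A7|A7]]; [left|right; left|right; right]; lra.
Qed.

Lemma interiorQ_spec x : interior (holds solidQ) x -> holds interiorQ x.
Proof.
  intro H. destruct (interior_probes _ x H) as [d [hd T]].
  pose proof (T (-1) 0 0) as A1; pose proof (T 1 0 0) as A2; pose proof (T 0 (-1) 0) as A3;
    pose proof (T 0 1 0) as A4; pose proof (T 0 0 (-1)) as A5; pose proof (T 0 0 1) as A6;
    pose proof (T 1 1 1) as A7; simpl in *.
  specialize (A1 ltac:(lra) ltac:(lra) ltac:(lra)). specialize (A2 ltac:(lra) ltac:(lra) ltac:(lra)).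
  specialize (A3 ltac:(lra) ltac:(lra) ltac:(lra)). specialize (A4 ltac:(lra) ltac:(lra) ltac:(lra)).
  specialize (A5 ltac:(lra) ltac:(lra) ltac:(lra)). specialize (A6 ltac:(lra) ltac:(lra) ltac:(lra)).
  specialize (A7 ltac:(lra) ltac:(lra) ltac:(lra)).
  destruct A7 as [_ A7]. split; [lra|]. destruct A7 as [A7|[A7 A8]]; [left|right]; lra.
Qed.

Lemma convex_comb_lt (hi p m s : R) : p <= hi -> m < hi -> 0 < s <= 1 -> p + s * (m - p) < hi.
Proof.
  intros. assert (0 <= (1-s)*(hi-p)) by (apply Rmult_le_pos; lra).
  assert (0 < s*(hi-m)) by (apply Rmult_lt_0_compat; lra). nra.
Qed.

Lemma convex_comb_gt (lo p m s : R) : lo <= p -> lo < m -> 0 < s <= 1 -> lo < p + s * (m - p).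
Proof.
  intros. assert (0 <= (1-s)*(p-lo)) by (apply Rmult_le_pos; lra).
  assert (0 < s*(m-lo)) by (apply Rmult_lt_0_compat; lra). nra.
Qed.

(* Both solids are star-shaped about the centre of the small cube [0,1]^3. *)
Lemma solidP_closure x : holds solidP x -> closure (interior (holds solidP)) x.
Proof.
  intro H. apply (closure_interior_of_segment _ (mkv (1/2) (1/2) (1/2))). intros s hs.
  apply (open_subset_interior (holds interiorP)); [apply open_form_open; reflexivity| |].
  - intros y hy. destruct (valid_sound (FImp interiorP solidP) ltac:(vm_compute; reflexivity) y); tauto.
  - unfold seg_point, vadd, vscale, vsub. simpl in *.
    destruct H as [[b1 [b2 [b3 [b4 [b5 b6]]]]] H].
    repeat split; try (apply convex_comb_gt; lra); try (apply convex_comb_lt; lra).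
    destruct H as [H|[H|H]]; [left|right; left|right; right]; apply convex_comb_lt; lra.
Qed.

Lemma solidQ_closure x : holds solidQ x -> closure (interior (holds solidQ)) x.
Proof.
  intro H. apply (closure_interior_of_segment _ (mkv (1/2) (1/2) (1/2))). intros s hs.
  apply (open_subset_interior (holds interiorQ)); [apply open_form_open; reflexivity| |].
  - intros y hy. destruct (valid_sound (FImp interiorQ solidQ) ltac:(vm_compute; reflexivity) y); tauto.
  - unfold seg_point, vadd, vscale, vsub. simpl in *.
    destruct H as [[b1 [b2 [b3 [b4 [b5 b6]]]]] H].
    repeat split; try (apply convex_comb_gt; lra); try (apply convex_comb_lt; lra).
    destruct H as [H|[H H']]; [left|right; split]; apply convex_comb_lt; lra.
Qed.

Lemma solidP_connected : connected (holds solidP).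
Proof.
  eapply connected_ext; [|apply connected_union;
    [apply convex_connected, (box_convex 0 1 0 2 0 2)
    |apply connected_union; [apply convex_connected, (box_convex 0 2 0 1 0 2)
                            |apply convex_connected, (box_convex 0 2 0 2 0 1)|]|]].
  - intro x. simpl. split.
    + intros [[h1 [h2 h3]]|[[h1 [h2 h3]]|[h1 [h2 h3]]]]; repeat split; lra.
    + intros [[b1 [b2 [b3 [b4 [b5 b6]]]]] [H|[H|H]]]; [left|right; left|right; right]; repeat split; lra.
  - exists (mkv 0 0 0). simpl. repeat split; lra.
  - exists (mkv 0 0 0). simpl. split; [repeat split; lra|left; repeat split; lra].
Qed.

Lemma solidQ_connected : connected (holds solidQ).
Proof.
  eapply connected_ext; [|apply connected_union;
    [apply convex_connected, (box_convex 0 2 0 2 0 1)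
    |apply convex_connected, (box_convex 0 1 0 1 0 2)|]].
  - intro x. simpl. split.
    + intros [[h1 [h2 h3]]|[h1 [h2 h3]]]; repeat split; lra.
    + intros [[b1 [b2 [b3 [b4 [b5 b6]]]]] [H|[H H']]]; [left|right]; repeat split; lra.
  - exists (mkv 0 0 0). simpl. repeat split; lra.
Qed.

Definition marker_points : list pt3 :=
  [(0,0,0);(0,0,0);(0,0,0);(2,0,0);(0,2,0);(0,0,2);(1,1,1);(1,1,1);(1,1,1)]%Z.

Definition anchors : list (aface * pt3) := combine facesP marker_points.

Lemma polyhedron_with_markups (sF iF : form) (fs : list aface) :
  polyhedron_check sF iF fs = true -> valid (FImp sF cube_form) = true -> connected (holds sF) ->
  (forall x, interior (holds sF) x -> holds iF x) ->
  (forall x, holds sF x -> closure (interior (holds sF)) x) ->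
  forallb (fun t => existsb (fun f => anchors_face f (fst t) (snd t)) fs) anchors = true ->
  forallb (fun f => existsb (fun t => anchors_face f (fst t) (snd t)) anchors) fs = true ->
  polyhedron (holds sF) /\
  pp_markup (holds sF) (map pp_marker_of anchors) /\ pn_markup (holds sF) (map pn_marker_of anchors).
Proof.
  intros Hc Hcube Hconn Hint Hcl Ha Hb.
  destruct (polyhedron_check_sound sF iF fs Hc Hconn (bounded_cube sF Hcube) Hint Hcl) as [HP [FC1 FC2]].
  split; auto. apply (markups_of_anchors _ fs); auto.
Qed.

Theorem mainTheorem3 :
  exists P Q : pset,
    polyhedron P /\ polyhedron Q /\ ~ convex P /\ ~ convex Q /\
    (exists x, ~ (P x <-> Q x)) /\
    (exists M : list pp_marker, pp_markup P M /\ pp_markup Q M) /\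
    (exists M : list pn_marker, pn_markup P M /\ pn_markup Q M).
Proof.
  destruct (polyhedron_with_markups solidP interiorP facesP ltac:(vm_compute; reflexivity)
              ltac:(vm_compute; reflexivity) solidP_connected interiorP_spec solidP_closure
              ltac:(vm_compute; reflexivity) ltac:(vm_compute; reflexivity)) as [HP [ppP pnP]].
  destruct (polyhedron_with_markups solidQ interiorQ facesQ ltac:(vm_compute; reflexivity)
              ltac:(vm_compute; reflexivity) solidQ_connected interiorQ_spec solidQ_closure
              ltac:(vm_compute; reflexivity) ltac:(vm_compute; reflexivity)) as [HQ [ppQ pnQ]].
  exists (holds solidP), (holds solidQ).
  split; [exact HP|split; [exact HQ|split; [|split; [|split; [|split]]]]].
  - intro Hc. specialize (Hc (mkv 2 2 1) (mkv 1 2 2)). simpl in Hc.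
    destruct (Hc ltac:(repeat split; lra) ltac:(repeat split; lra) (1/2) ltac:(lra)) as [_ H]. lra.
  - intro Hc. specialize (Hc (mkv 2 2 1) (mkv 1 1 2)). simpl in Hc.
    destruct (Hc ltac:(split; [repeat split; lra|left; lra])
                 ltac:(split; [repeat split; lra|right; split; lra]) (1/2) ltac:(lra)) as [_ H]. lra.
  - exists (mkv (1/2) 2 2). simpl. intros [H _].
    destruct (H ltac:(split; [repeat split; lra|left; lra])) as [_ [h|[h h']]]; lra.
  - exists (map pp_marker_of anchors); split; assumption.
  - exists (map pn_marker_of anchors); split; assumption.
Qed.
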